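(* Let $H(q,p,t)$, $q,p\in\mathbb{R}^n$, be of class $C^3$ and consider $\dot q_i=\partial H/\partial p_i$, $\dot p_i=-\partial H/\partial q_i$. Fix $h>0$, $t_0$ and $a\in\mathbb{R}$. Given $(\alpha,\beta)\in\mathbb{R}^{2n}$ define $(q,p)$ and then $(Q,P)$ by $$q_i=\alpha_i+\tfrac h2\frac{\partial H}{\partial p_i}(q,\beta,t_0+ah),\qquad p_i=\beta_i-\tfrac h2\frac{\partial H}{\partial q_i}(q,\beta,t_0+ah),$$ $$P_i=p_i-\tfrac h2\frac{\partial H}{\partial q_i}(q,P,t_0+(1-a)h),\qquad Q_i=q_i+\tfrac h2\frac{\partial H}{\partial p_i}(q,P,t_0+(1-a)h),$$ where the equations for $q$ and for $P$ are implicit. (i) On any open set where these implicit equations define $q$ and $P$ as $C^1$ functions, the map $(\alpha,\beta)\mapsto(Q,P)$ is a contact (canonical) transformation: $\sum_i dP_i\wedge dQ_i=\sum_i d\beta_i\wedge d\alpha_i$. (ii) Taking for small $h$ the solutions of the implicit equations near $\alpha$ and $\beta$, and letting $(q(t),p(t))$ be the exact solution with $q(t_0)=\alpha$, $p(t_0)=\beta$, one has $Q-q(t_0+h)=O(h^3)$ and $P-p(t_0+h)=O(h^3)$; i.e. the method is of second order. *)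

From HB Require Import structures.
From mathcomp Require Import all_boot.
From Stdlib Require Import Reals.

Set Implicit Arguments.
Unset Strict Implicit.
Unset Printing Implicit Defensive.

Local Open Scope R_scope.

Definition vec (n : nat) := 'I_n -> R.

Definition upd (n : nat) (x : vec n) (j : 'I_n) (s : R) : vec n :=
  fun k => if k == j then s else x k.

Definition vball (n : nat) (x : vec n) (d : R) (y : vec n) : Prop :=
  forall j, Rabs (y j - x j) < d.

Definition is_open (n : nat) (U : vec n -> Prop) : Prop :=
  forall x, U x -> exists d, 0 < d /\ forall y, vball x d y -> U y.

Definition cont_on (n : nat) (U : vec n -> Prop) (g : vec n -> R) : Prop :=
  forall x, U x -> forall eps, 0 < eps ->
    exists d, 0 < d /\ forall y, U y -> vball x d y -> Rabs (g y - g x) < eps.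

Definition partial_on (n : nat) (U : vec n -> Prop) (g : vec n -> R)
    (j : 'I_n) (dg : vec n -> R) : Prop :=
  forall x, U x -> derivable_pt_lim (fun s => g (upd x j s)) (x j) (dg x).

Fixpoint Ck_on (n : nat) (U : vec n -> Prop) (k : nat) (g : vec n -> R)
    {struct k} : Prop :=
  match k with
  | O => cont_on U g
  | S k' => cont_on U g /\
      forall j, exists dg, partial_on U g j dg /\ Ck_on U k' dg
  end.

Definition everywhere (n : nat) : vec n -> Prop := fun _ => True.

Definition Hpack (n : nat) (H : vec n -> vec n -> R -> R) : vec (n + n + 1) -> R :=
  fun z => H (fun i => z (lshift 1 (lshift n i)))
             (fun i => z (lshift 1 (rshift n i)))
             (z (rshift (n + n) ord0)).

(* splitting (alpha, beta) in R^(2n) *)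
Definition fst_half (n : nat) (z : vec (n + n)) : vec n := fun i => z (lshift n i).
Definition snd_half (n : nat) (z : vec (n + n)) : vec n := fun i => z (rshift n i).

Definition dirder (N : nat) (g : vec N -> R) (x u : vec N) (l : R) : Prop :=
  derivable_pt_lim (fun s => g (fun k => x k + s * u k)) 0 l.

Definition rsum (n : nat) (f : 'I_n -> R) : R := \big[Rplus/0]_(i < n) f i.

(* The scheme.  Hq, Hp : partial derivatives of H w.r.t. q_i and p_i. *)
Section Scheme.
Variables (n : nat) (Hq Hp : vec n -> vec n -> R -> vec n).
Variables (h t0 a : R) (alpha beta : vec n).

Definition step_p (q : vec n) : vec n :=
  fun i => beta i - h / 2 * Hq q beta (t0 + a * h) i.

Definition step_Q (q P : vec n) : vec n :=
  fun i => q i + h / 2 * Hp q P (t0 + (1 - a) * h) i.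

Definition step_eqs (q P : vec n) : Prop :=
  (forall i, q i = alpha i + h / 2 * Hp q beta (t0 + a * h) i) /\
  (forall i, P i = step_p q i - h / 2 * Hq q P (t0 + (1 - a) * h) i).
End Scheme.

(* Write x = (q, p, t) and F(x) = (dH/dp, -dH/dq, 1) for the Hamiltonian vector field on
   extended phase space.

   (i) The step is the composite of two half steps, (alpha, beta) -> (q, p), implicit in q, and
   (q, p) -> (Q, P), implicit in P.  Differentiating the implicit equations along two directions
   shows that each half step changes sum_i dp_i /\ dq_i by h/2 times the antisymmetrization of a
   bilinear form built from the Hessian of H; this form is symmetric by Schwarz's theorem, so the
   change vanishes.

   (ii) With w1 = (q, beta, t0 + a h) and w2 = (q, P, t0 + (1 - a) h) the step reads
   (Q, P, t0 + h) = x0 + h/2 (F w1 + F w2), while (w1 - x0) + (w2 - x0) = h F x0 + O(h^2).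
   Expanding F to first order at x0 gives x0 + h F x0 + h^2/2 DF(x0) F x0 + O(h^3), which is
   also the Taylor expansion of the exact flow.  For small h the implicit equations are fixed
   points of contractions, hence solvable near (alpha, beta). *)

From HB Require Import structures.
From mathcomp Require Import all_boot zify.
From Stdlib Require Import Reals Lra Psatz FunctionalExtensionality.
From Stdlib Require IndefiniteDescription.
Set Implicit Arguments.
Unset Strict Implicit.
Unset Printing Implicit Defensive.

Local Open Scope R_scope.

HB.instance Definition _ := Monoid.isComLaw.Build R 0 Rplus
  (fun x y z => esym (Rplus_assoc x y z)) Rplus_comm Rplus_0_l.

(** * Sums over finite index sets *)

Lemma eq_rsum N (F G : 'I_N -> R) : (forall i, F i = G i) -> rsum F = rsum G.
Proof. by move=> e; apply: eq_bigr => i _; exact: e. Qed.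

Lemma rsumD N (F G : 'I_N -> R) : rsum (fun i => F i + G i) = rsum F + rsum G.
Proof. exact: big_split. Qed.

Lemma rsum0 N : rsum (fun _ : 'I_N => 0) = 0.
Proof. exact: big1. Qed.

Lemma rsumZ N c (F : 'I_N -> R) : rsum (fun i => c * F i) = c * rsum F.
Proof.
apply: (big_rec2 (fun x y => x = c * y)); first ring.
by move=> i x y _ ->; ring.
Qed.

Lemma rsumZr N c (F : 'I_N -> R) : rsum (fun i => F i * c) = rsum F * c.
Proof. by rewrite Rmult_comm -rsumZ; apply: eq_rsum => i; ring. Qed.

Lemma rsumB N (F G : 'I_N -> R) : rsum (fun i => F i - G i) = rsum F - rsum G.
Proof.
rewrite (@eq_rsum N _ (fun i => F i + (-1) * G i)); last by move=> i; ring.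
by rewrite rsumD rsumZ; ring.
Qed.

Lemma Rabs_rsum_le N (F : 'I_N -> R) : Rabs (rsum F) <= rsum (fun i => Rabs (F i)).
Proof.
apply: (big_rec2 (fun x y => Rabs x <= y)); first by rewrite Rabs_R0; lra.
by move=> i x y _ h; apply: Rle_trans (Rabs_triang _ _) _; lra.
Qed.

Lemma rsum_le N (F G : 'I_N -> R) : (forall i, F i <= G i) -> rsum F <= rsum G.
Proof.
move=> e; apply: (big_rec2 (fun x y => x <= y)); first lra.
by move=> i x y _ h; have := e i; lra.
Qed.

Lemma rsum_const N c : rsum (fun _ : 'I_N => c) = INR N * c.
Proof.
rewrite /rsum; elim: N => [|N IH]; first by rewrite big_ord0 /=; ring.
by rewrite S_INR big_ord_recr /= IH; ring.
Qed.

Lemma rsum_le_const N (F : 'I_N -> R) c : (forall i, F i <= c) -> rsum F <= INR N * c.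
Proof. by rewrite -rsum_const; exact: rsum_le. Qed.

Lemma rsum_ge0 N (F : 'I_N -> R) : (forall i, 0 <= F i) -> 0 <= rsum F.
Proof. by move=> e; rewrite -(rsum0 N); exact: rsum_le. Qed.

Lemma exchange_rsum N M (F : 'I_N -> 'I_M -> R) :
  rsum (fun i => rsum (fun j => F i j)) = rsum (fun j => rsum (fun i => F i j)).
Proof. exact: exchange_big. Qed.

Lemma rsum_split_ord N M (F : 'I_(N + M) -> R) :
  rsum F = rsum (fun i => F (lshift M i)) + rsum (fun i => F (rshift N i)).
Proof. exact: big_split_ord. Qed.

Lemma rsum_prefixS N (A : 'I_N -> R) (m : nat) (Hm : (m < N)%nat) :
  rsum (fun k : 'I_N => if (k < m.+1)%nat then A k else 0) =
  rsum (fun k : 'I_N => if (k < m)%nat then A k else 0) + A (Ordinal Hm).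
Proof.
rewrite /rsum [in RHS](bigD1 (Ordinal Hm)) //= ltnn Rplus_0_l Rplus_comm.
rewrite [in LHS](bigD1 (Ordinal Hm)) //= ltnSn; congr (_ + _).
apply: eq_bigr => k /negbTE; rewrite -(inj_eq val_inj) /= ltnS leq_eqVlt => ->.
by [].
Qed.

(** * Differential calculus in the sup norm *)

Definition cball {N} (c : vec N) (d : R) (y : vec N) : Prop :=
  forall j, Rabs (y j - c j) <= d.

Lemma cball_center N (c : vec N) d : 0 <= d -> cball c d c.
Proof. by move=> d0 j; rewrite Rminus_diag Rabs_R0. Qed.

Lemma cball_le N (c y : vec N) d d' : d <= d' -> cball c d y -> cball c d' y.
Proof. by move=> le hy j; apply: Rle_trans (hy j) le. Qed.

Lemma finite_min_radius (I : finType) (P : I -> R -> Prop) :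
  (forall i d d', 0 < d' <= d -> P i d -> P i d') ->
  (forall i, exists d, 0 < d /\ P i d) -> exists d, 0 < d /\ forall i, P i d.
Proof.
move=> mono ex.
suff [d [d0 H]] : exists d, 0 < d /\ forall i, i \in enum I -> P i d.
  by exists d; split => // i; apply: H; rewrite mem_enum.
elim: (enum I) => [|a s [d [d0 IH]]]; first by exists 1; split => //; lra.
have [da [da0 Pa]] := ex a.
exists (Rmin d da); split; first exact: Rmin_glb_lt.
move=> i; rewrite in_cons => /orP [/eqP -> | /IH Hi].
- by apply: mono Pa; split; [exact: Rmin_glb_lt | exact: Rmin_r].
- by apply: mono Hi; split; [exact: Rmin_glb_lt | exact: Rmin_l].
Qed.

Lemma finite_upper_bound (I : finType) (F : I -> R) : exists B, 1 <= B /\ forall i, F i <= B.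
Proof.
suff [B [B1 H]] : exists B, 1 <= B /\ forall i, i \in enum I -> F i <= B.
  by exists B; split => // i; apply: H; rewrite mem_enum.
elim: (enum I) => [|a s [B [B1 IH]]]; first by exists 1; split => //; lra.
exists (Rmax B (F a)); split; first by apply: Rle_trans B1 (Rmax_l _ _).
move=> i; rewrite in_cons => /orP [/eqP -> | /IH Hi]; first exact: Rmax_r.
exact: Rle_trans Hi (Rmax_l _ _).
Qed.

Lemma cont_on_cball N (f : vec N -> R) : cont_on (@everywhere N) f ->
  forall x eps, 0 < eps -> exists e, 0 < e /\ forall y, cball x e y -> Rabs (f y - f x) <= eps.
Proof.
move=> hc x eps e0; have [d [d0 hd]] := hc x I eps e0.
exists (d / 2); split; first lra.
by move=> y hy; apply: Rlt_le; apply: hd => // j; have := hy j; lra.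
Qed.

Lemma cont_family_bounded N (I : finType) (F : I -> vec N -> R) x0 :
  (forall i, cont_on (@everywhere N) (F i)) ->
  exists d B, 0 < d /\ 1 <= B /\ forall i y, cball x0 d y -> Rabs (F i y) <= B.
Proof.
move=> hc.
have [d [d0 hd]] := @finite_min_radius I
  (fun i d => forall y, cball x0 d y -> Rabs (F i y - F i x0) <= 1)
  (fun i d d' hdd H y hy => H y (cball_le (proj2 hdd) hy))
  (fun i => @cont_on_cball N (F i) (hc i) x0 1 ltac:(lra)).
have [B [B1 hB]] := finite_upper_bound (fun i => Rabs (F i x0) + 1).
exists d, B; split => //; split => // i y hy.
have := hd i y hy; have := hB i; have := Rabs_triang (F i y - F i x0) (F i x0).
by rewrite (_ : F i y - F i x0 + F i x0 = F i y); [lra | ring].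
Qed.

Lemma mean_value_ineq (phi phi' : R -> R) a b K : a <= b ->
  (forall s, a <= s <= b -> derivable_pt_lim phi s (phi' s)) ->
  (forall s, a <= s <= b -> Rabs (phi' s) <= K) ->
  Rabs (phi b - phi a) <= K * (b - a).
Proof.
move=> ab hd hb; case: (Req_dec a b) => [<-|ne].
  by rewrite !Rminus_diag Rabs_R0; lra.
have [c [e [c1 c2]]] := MVT_cor2 phi phi' a b ltac:(lra) hd.
rewrite e Rabs_mult (Rabs_right (b - a)); last lra.
by apply: Rmult_le_compat_r; [lra | apply: hb; lra].
Qed.

Lemma derivable_pt_lim_affine a b x : derivable_pt_lim (fun s => a + s * b) x b.
Proof.
have h := derivable_pt_lim_plus _ _ x _ _ (derivable_pt_lim_const a x)
   (derivable_pt_lim_scal id b x 1 (derivable_pt_lim_id x)).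
rewrite Rplus_0_l Rmult_1_r in h.
by apply: (derivable_pt_lim_ext _ _ _ _ _ h) => s; rewrite /plus_fct /fct_cte /mult_real_fct /id; ring.
Qed.

Lemma derivable_pt_lim_locally_eq (f g : R -> R) x l eta : 0 < eta ->
  (forall s, Rabs (s - x) < eta -> f s = g s) ->
  derivable_pt_lim f x l -> derivable_pt_lim g x l.
Proof.
move=> e0 he hf eps ep; have [dl hdl] := hf eps ep.
have p : 0 < Rmin dl eta by apply: Rmin_glb_lt => //; exact: cond_pos.
exists (mkposreal _ p) => hh hn /= ha.
rewrite -!he; first (apply: hdl => //; have := Rmin_l dl eta; lra).
- by rewrite Rminus_diag Rabs_R0.
- by rewrite (_ : x + hh - x = hh); [have := Rmin_r dl eta; lra | ring].
Qed.

Lemma upd_same N (x : vec N) j s : upd x j s j = s.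
Proof. by rewrite /upd eqxx. Qed.

Lemma upd_other N (x : vec N) j s k : k != j -> upd x j s k = x k.
Proof. by rewrite /upd => /negbTE ->. Qed.

Lemma upd_upd N (x : vec N) j s s' : upd (upd x j s) j s' = upd x j s'.
Proof. by apply: functional_extensionality => k; rewrite /upd; case: (k == j). Qed.

Lemma upd_id N (x : vec N) j : upd x j (x j) = x.
Proof. by apply: functional_extensionality => k; rewrite /upd; case: eqP => [->|]. Qed.

Lemma upd_comm N (y : vec N) j k a b : j != k -> upd (upd y j a) k b = upd (upd y k b) j a.
Proof.
move=> jk; apply: functional_extensionality => l; rewrite /upd.
case: eqP => [->|_]; case: eqP => [e|_] //.
by move: jk; rewrite e eqxx.
Qed.

Lemma coord_increment_le N (g : vec N -> R) (D : vec N -> R) k c d kap eps :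
  (forall y, cball c d y -> derivable_pt_lim (fun s => g (upd y k s)) (y k) (D y)) ->
  (forall y, cball c d y -> Rabs (D y - kap) <= eps) ->
  forall y s, cball c d y -> Rabs (s - c k) <= d ->
  Rabs (g (upd y k s) - g y - kap * (s - y k)) <= eps * Rabs (s - y k).
Proof.
move=> hd hb y s hy hs.
pose phi sg := g (upd y k sg) - kap * sg.
have inb : forall sg, Rmin (y k) s <= sg <= Rmax (y k) s -> cball c d (upd y k sg).
  move=> sg hsg j; rewrite /upd; case: eqP => [->|_]; last exact: hy.
  have := hy k; move: hsg; rewrite /Rmin /Rmax.
  by case: Rle_dec => _ [h1 h2]; move: hs; rewrite /Rabs; repeat case: Rcase_abs; lra.
have dphi : forall sg, Rmin (y k) s <= sg <= Rmax (y k) s ->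
    derivable_pt_lim phi sg (D (upd y k sg) - kap).
  move=> sg hsg; have := hd _ (inb _ hsg); rewrite upd_same.
  under [fun s0 => _]functional_extensionality => s0 do rewrite upd_upd.
  move=> h; have := derivable_pt_lim_minus _ _ _ _ _ h
    (derivable_pt_lim_scal id kap sg 1 (derivable_pt_lim_id sg)).
  by rewrite Rmult_1_r.
have bphi : forall sg, Rmin (y k) s <= sg <= Rmax (y k) s ->
    Rabs (D (upd y k sg) - kap) <= eps.
  by move=> sg hsg; apply: hb; apply: inb.
have phi0 : phi (y k) = g y - kap * y k by rewrite /phi upd_id.
case: (Rle_dec (y k) s) => hle.
- have mn : Rmin (y k) s = y k by rewrite /Rmin; case: Rle_dec.
  have mx : Rmax (y k) s = s by rewrite /Rmax; case: Rle_dec.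
  rewrite mn mx in dphi bphi.
  have := mean_value_ineq hle dphi bphi.
  rewrite phi0 /phi (Rabs_right (s - y k)); last lra.
  by rewrite (_ : g (upd y k s) - kap * s - (g y - kap * y k) =
                  g (upd y k s) - g y - kap * (s - y k)); last ring.
- have mn : Rmin (y k) s = s by rewrite /Rmin; case: Rle_dec.
  have mx : Rmax (y k) s = y k by rewrite /Rmax; case: Rle_dec.
  rewrite mn mx in dphi bphi.
  have := mean_value_ineq (Rlt_le _ _ (Rnot_le_lt _ _ hle)) dphi bphi.
  rewrite phi0 /phi (Rabs_left1 (s - y k)); last lra.
  rewrite -Rabs_Ropp (_ : - (g y - kap * y k - (g (upd y k s) - kap * s)) =
                          g (upd y k s) - g y - kap * (s - y k)); last ring.
  by rewrite (_ : eps * (y k - s) = eps * - (s - y k)); last ring.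
Qed.

(* Telescope along the coordinates, changing one at a time. *)
Lemma linearization_le N (g : vec N -> R) (D : 'I_N -> vec N -> R) c d (kap : 'I_N -> R) eps :
  (forall y, cball c d y -> forall k, derivable_pt_lim (fun s => g (upd y k s)) (y k) (D k y)) ->
  (forall k y, cball c d y -> Rabs (D k y - kap k) <= eps) ->
  forall x y rho, cball c d x -> cball c d y -> (forall j, Rabs (x j - y j) <= rho) ->
  Rabs (g x - g y - rsum (fun k => kap k * (x k - y k))) <= eps * INR N * rho.
Proof.
move=> hd hb x y rho hx hy hr.
pose z (m : nat) : vec N := fun j => if (j < m)%nat then x j else y j.
have zb : forall m, cball c d (z m).
  by move=> m j; rewrite /z; case: ifP => _; [apply: hx | apply: hy].
suff: forall m, (m <= N)%nat -> Rabs (g (z m) - g y -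
   rsum (fun k : 'I_N => if (k < m)%nat then kap k * (x k - y k) else 0)) <= eps * INR m * rho.
  move/(_ N (leqnn N)).
  rewrite (_ : z N = x); last by apply: functional_extensionality => j; rewrite /z ltn_ord.
  by rewrite (@eq_rsum N _ (fun k => kap k * (x k - y k))) // => k; rewrite ltn_ord.
elim=> [|m IH] hm.
  rewrite (_ : z 0%nat = y); last by apply: functional_extensionality => j; rewrite /z ltn0.
  rewrite (@eq_rsum N _ (fun _ => 0)); last by move=> k; rewrite ltn0.
  by rewrite rsum0 /= Rminus_diag Rminus_0_r Rabs_R0; lra.
have IH' := IH (ltnW hm).
set o := Ordinal hm.
have ez : z m.+1 = upd (z m) o (x o).
  apply: functional_extensionality => j; rewrite /z /upd ltnS leq_eqVlt -(inj_eq val_inj) /=.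
  case: (ltngtP j m) => //= h.
  by have -> : j = o by apply: val_inj.
have zo : z m o = y o by rewrite /z /= ltnn.
have cs := @coord_increment_le N g (D o) o c d (kap o) eps (fun y0 hy0 => hd y0 hy0 o)
  (fun y0 hy0 => hb o y0 hy0) (z m) (x o) (zb m) (hx o).
rewrite -ez zo in cs.
rewrite (rsum_prefixS _ hm) -/o S_INR.
have e0 : 0 <= eps by have := hb o y hy; have := Rabs_pos (D o y - kap o); lra.
have : eps * Rabs (x o - y o) <= eps * rho by apply: Rmult_le_compat_l.
move: cs IH'.
set A := g (z m.+1); set B := g (z m); set S := rsum _; set T := kap o * (x o - y o).
move=> cs IH' hh.
rewrite (_ : A - g y - (S + T) = (A - B - T) + (B - g y - S)); last ring.
by apply: Rle_trans (Rabs_triang _ _) _; lra.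
Qed.

Lemma lipschitz_cball N (g : vec N -> R) (D : 'I_N -> vec N -> R) c d B :
  (forall y l, derivable_pt_lim (fun s => g (upd y l s)) (y l) (D l y)) ->
  (forall l y, cball c d y -> Rabs (D l y) <= B) ->
  forall x y rho, cball c d x -> cball c d y -> (forall j, Rabs (x j - y j) <= rho) ->
  Rabs (g x - g y) <= B * INR N * rho.
Proof.
move=> hg hb x y rho hx hy hr.
have := @linearization_le N g D c d (fun _ => 0) B (fun y0 _ k => hg y0 k)
  (fun k y0 hy0 => ltac:(rewrite Rminus_0_r; exact: hb)) x y rho hx hy hr.
rewrite (@eq_rsum N _ (fun _ => 0)); last by move=> k; ring.
by rewrite rsum0 Rminus_0_r.
Qed.

Lemma taylor1_remainder_le N (g : vec N -> R) (D : 'I_N -> vec N -> R)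
    (DD : 'I_N -> 'I_N -> vec N -> R) c d B :
  (forall y l, derivable_pt_lim (fun s => g (upd y l s)) (y l) (D l y)) ->
  (forall y l m, derivable_pt_lim (fun s => D l (upd y m s)) (y m) (DD l m y)) ->
  (forall l m y, cball c d y -> Rabs (DD l m y) <= B) ->
  forall x rho, 0 <= rho <= d -> cball c rho x ->
  Rabs (g x - g c - rsum (fun k => D k c * (x k - c k))) <= (B * INR N * rho) * INR N * rho.
Proof.
move=> hg hD hb x rho [r0 rd] hx.
have sub : forall y, cball c rho y -> cball c d y by move=> y; exact: cball_le.
have hk : forall k y, cball c rho y -> Rabs (D k y - D k c) <= B * INR N * rho.
  move=> k y hy; exact: (lipschitz_cball (fun y0 l => hD y0 k l) (fun l y0 hy0 => hb k l y0 hy0)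
    (sub y hy) (sub c (cball_center c r0)) hy).
exact: (linearization_le (fun y0 _ k => hg y0 k) hk hx (cball_center c r0) hx).
Qed.

Lemma frechet_of_partials N (g : vec N -> R) (D : 'I_N -> vec N -> R) c d :
  0 < d ->
  (forall y, cball c d y -> forall k, derivable_pt_lim (fun s => g (upd y k s)) (y k) (D k y)) ->
  (forall k eps, 0 < eps -> exists e, 0 < e /\ forall y, cball c e y -> Rabs (D k y - D k c) <= eps) ->
  forall eps, 0 < eps -> exists e, 0 < e /\ forall x rho, 0 <= rho <= e -> cball c rho x ->
    Rabs (g x - g c - rsum (fun k => D k c * (x k - c k))) <= eps * rho.
Proof.
move=> d0 hd hc eps e0.
have N0 := pos_INR N.
pose eps' := eps / (INR N + 1).
have e'0 : 0 < eps' by apply: Rdiv_lt_0_compat; lra.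
have [e [ep he]] := @finite_min_radius _
  (fun k e => forall y, cball c e y -> Rabs (D k y - D k c) <= eps')
  (fun k e1 e2 he12 H y hy => H y (cball_le (proj2 he12) hy)) (fun k => hc k eps' e'0).
exists (Rmin e d); split; first exact: Rmin_glb_lt.
move=> x rho [r0 re] hx.
have sub : forall y, cball c rho y -> cball c d y /\ cball c e y.
  by move=> y hy; split; apply: cball_le hy; have := Rmin_l e d; have := Rmin_r e d; lra.
have := @linearization_le N g D c rho (fun k => D k c) eps'
  (fun y hy => hd y (proj1 (sub y hy))) (fun k y hy => he k y (proj2 (sub y hy)))
  x c rho hx (cball_center c r0) hx.
have : eps' * INR N <= eps.
  rewrite /eps' (_ : eps / (INR N + 1) * INR N = eps - eps / (INR N + 1)); last by field; lra.
  have : 0 < eps / (INR N + 1) by apply: Rdiv_lt_0_compat; lra.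
  lra.
nra.
Qed.

Lemma Rabs_rsum_mul_le N (c x : 'I_N -> R) e : (forall k, Rabs (x k) <= e) ->
  Rabs (rsum (fun k => c k * x k)) <= rsum (fun k => Rabs (c k)) * e.
Proof.
move=> hx; apply: Rle_trans (Rabs_rsum_le _) _; rewrite -rsumZr; apply: rsum_le => k.
by rewrite Rabs_mult; apply: Rmult_le_compat_l; [exact: Rabs_pos | exact: hx].
Qed.

Lemma derivable_pt_lim_uniform N (gam : R -> vec N) (gam' : 'I_N -> R) s0 eps :
  (forall k, derivable_pt_lim (fun s => gam s k) s0 (gam' k)) -> 0 < eps ->
  exists eta, 0 < eta /\ forall h, h <> 0 -> Rabs h < eta ->
    forall k, Rabs ((gam (s0 + h) k - gam s0 k) / h - gam' k) <= eps.
Proof.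
move=> hg e0.
have [eta [etap heta]] := @finite_min_radius _ (fun k eta => forall h, h <> 0 -> Rabs h < eta ->
     Rabs ((gam (s0 + h) k - gam s0 k) / h - gam' k) < eps)
   (fun k d1 d2 hd12 H h hn hh => H h hn ltac:(lra))
   (fun k => let: ex_intro dl Hd := hg k eps e0 in ex_intro _ (pos dl) (conj (cond_pos dl) Hd)).
by exists eta; split => // h hn hh k; apply: Rlt_le; exact: heta.
Qed.

Lemma chain_rule_frechet N (g : vec N -> R) (Dc : 'I_N -> R) (c : vec N)
    (gam : R -> vec N) (gam' : 'I_N -> R) s0 :
  (forall eps, 0 < eps -> exists e, 0 < e /\ forall x rho, 0 <= rho <= e -> cball c rho x ->
    Rabs (g x - g c - rsum (fun k => Dc k * (x k - c k))) <= eps * rho) ->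
  gam s0 = c ->
  (forall k, derivable_pt_lim (fun s => gam s k) s0 (gam' k)) ->
  derivable_pt_lim (fun s => g (gam s)) s0 (rsum (fun k => Dc k * gam' k)).
Proof.
move=> hf hg0 hg eps e0.
have [Gb [Gb1 hGb]] := finite_upper_bound (fun k => Rabs (gam' k) + 1).
pose Sd := rsum (fun k => Rabs (Dc k)).
have Sd0 : 0 <= Sd by apply: rsum_ge0 => k; exact: Rabs_pos.
pose eps2 := Rmin 1 (eps / (2 * (Sd + 1))).
have eps2p : 0 < eps2 by apply: Rmin_glb_lt; [lra | apply: Rdiv_lt_0_compat; lra].
have [eta [etap quot]] := derivable_pt_lim_uniform hg eps2p.
have [e [ep he]] := hf (eps / (2 * Gb)) ltac:(apply: Rdiv_lt_0_compat; lra).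
have dl : 0 < Rmin eta (e / Gb) by apply: Rmin_glb_lt => //; apply: Rdiv_lt_0_compat; lra.
exists (mkposreal _ dl) => h hn /= hh.
have {}quot := quot h hn ltac:(have := Rmin_l eta (e / Gb); lra); rewrite hg0 in quot.
have hap : 0 < Rabs h by apply: Rabs_pos_lt.
have hGh : Gb * Rabs h <= e.
  have : Gb * Rabs h <= Gb * (e / Gb) by apply: Rmult_le_compat_l; have := Rmin_r eta (e / Gb); lra.
  by rewrite (_ : Gb * (e / Gb) = e); [lra | field; lra].
(* The quotient bound makes gam Lipschitz at s0, so Frechet applies at radius Gb |h|. *)
have disp : cball c (Gb * Rabs h) (gam (s0 + h)).
  move=> k.
  rewrite (_ : gam (s0 + h) k - c k = ((gam (s0 + h) k - c k) / h - gam' k) * h + gam' k * h);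
    last by field.
  apply: Rle_trans (Rabs_triang _ _) _; rewrite !Rabs_mult.
  have := hGb k; have := Rabs_pos (gam' k); have := quot k; have := Rmin_l 1 (eps / (2 * (Sd + 1))).
  rewrite -/eps2; nra.
have F := he _ _ (conj (Rmult_le_pos Gb _ ltac:(lra) (Rabs_pos h)) hGh) disp.
set E := g (gam (s0 + h)) - g c - _ in F.
rewrite hg0 (_ : (g (gam (s0 + h)) - g c) / h - rsum (fun k => Dc k * gam' k) =
   E / h + rsum (fun k => Dc k * ((gam (s0 + h) k - c k) / h - gam' k))); last first.
  rewrite (@eq_rsum N (fun k => Dc k * ((gam (s0 + h) k - c k) / h - gam' k))
    (fun k => / h * (Dc k * (gam (s0 + h) k - c k)) - Dc k * gam' k)); last by move=> k; field.
  by rewrite rsumB rsumZ /E; field.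
apply: Rle_lt_trans (Rabs_triang _ _) _.
have b1 : Rabs (E / h) <= eps / 2.
  rewrite /Rdiv Rabs_mult Rabs_inv; apply: (Rmult_le_reg_r (Rabs h)) => //.
  rewrite Rmult_assoc Rinv_l; last lra.
  have : eps / (2 * Gb) * (Gb * Rabs h) = eps / 2 * Rabs h by field; lra.
  lra.
have b2 := Rabs_rsum_mul_le Dc quot; rewrite -/Sd in b2.
have : Sd * eps2 < eps / 2.
  have : Sd * eps2 <= Sd * (eps / (2 * (Sd + 1))) by apply: Rmult_le_compat_l => //; exact: Rmin_r.
  rewrite (_ : Sd * (eps / (2 * (Sd + 1))) = eps / 2 - eps / (2 * (Sd + 1))); last by field; lra.
  have : 0 < eps / (2 * (Sd + 1)) by apply: Rdiv_lt_0_compat; lra.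
  lra.
lra.
Qed.

Lemma chain_rule N (g : vec N -> R) (D : 'I_N -> vec N -> R) :
  (forall y l, derivable_pt_lim (fun s => g (upd y l s)) (y l) (D l y)) ->
  (forall l, cont_on (@everywhere N) (D l)) ->
  forall (gam : R -> vec N) (gam' : 'I_N -> R) s0,
  (forall k, derivable_pt_lim (fun s => gam s k) s0 (gam' k)) ->
  derivable_pt_lim (fun s => g (gam s)) s0 (rsum (fun k => D k (gam s0) * gam' k)).
Proof.
move=> hg hc gam gam' s0 hgam; apply: chain_rule_frechet => //.
apply: (@frechet_of_partials N g D (gam s0) 1) => //; first lra.
by move=> k eps e0; exact: cont_on_cball.
Qed.

Lemma mixed_difference_le N (g : vec N -> R) (D : 'I_N -> vec N -> R)
    (DD : 'I_N -> 'I_N -> vec N -> R) j k x eps eta :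
  j != k ->
  (forall y l, derivable_pt_lim (fun s => g (upd y l s)) (y l) (D l y)) ->
  (forall y l m, derivable_pt_lim (fun s => D l (upd y m s)) (y m) (DD l m y)) ->
  (forall y, cball x (2 * eta) y -> Rabs (DD j k y - DD j k x) <= eps) ->
  forall s t, Rabs s <= eta -> Rabs t <= eta ->
  Rabs (g (upd (upd x j (x j + s)) k (x k + t)) - g (upd x j (x j + s))
        - g (upd x k (x k + t)) + g x - s * t * DD j k x) <= eps * Rabs t * Rabs s.
Proof.
move=> jk hg hD hc s t hs ht.
have kj : k != j by rewrite eq_sym.
pose G y := g (upd y k (y k + t)) - g y.
pose D' y := D j (upd y k (y k + t)) - D j y.
have eta0 : 0 <= eta by have := Rabs_pos s; lra.
have H1 : forall y, cball x eta y -> derivable_pt_lim (fun sg => G (upd y j sg)) (y j) (D' y).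
  move=> y _; rewrite /G /D'.
  under [fun sg => _]functional_extensionality => sg do
    rewrite (upd_other _ _ kj) (upd_comm _ _ _ jk).
  apply: (derivable_pt_lim_minus (fun sg => g (upd (upd y k (y k + t)) j sg))
                                 (fun sg => g (upd y j sg))); last exact: hg.
  by have := hg (upd y k (y k + t)) j; rewrite (upd_other _ _ jk).
have H2 : forall y, cball x eta y -> Rabs (D' y - t * DD j k x) <= eps * Rabs t.
  move=> y hy.
  have := @coord_increment_le N (D j) (DD j k) k x (2 * eta) (DD j k x) eps
    (fun y0 _ => hD y0 j k) hc y (y k + t) (cball_le (d := eta) (d' := 2 * eta) ltac:(lra) hy)
    ltac:(have := hy k; move: ht; rewrite /Rabs; repeat case: Rcase_abs; lra).
  by rewrite (_ : y k + t - y k = t) 1?Rmult_comm; last ring.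
have := @coord_increment_le N G D' j x eta (t * DD j k x) (eps * Rabs t) H1 H2 x (x j + s)
  (cball_center x eta0) ltac:(by rewrite (_ : x j + s - x j = s); last ring).
rewrite (_ : x j + s - x j = s); last ring.
rewrite /G (upd_other _ _ kj).
by rewrite (_ : g (upd (upd x j (x j + s)) k (x k + t)) - g (upd x j (x j + s)) -
  (g (upd x k (x k + t)) - g x) - t * DD j k x * s =
  g (upd (upd x j (x j + s)) k (x k + t)) - g (upd x j (x j + s)) - g (upd x k (x k + t)) + g x -
  s * t * DD j k x); last ring.
Qed.

(* Schwarz: both mixed partials are the limit of the same second difference. *)
Lemma mixed_partials_sym N (g : vec N -> R) (D : 'I_N -> vec N -> R)
    (DD : 'I_N -> 'I_N -> vec N -> R) :
  (forall y l, derivable_pt_lim (fun s => g (upd y l s)) (y l) (D l y)) ->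
  (forall y l m, derivable_pt_lim (fun s => D l (upd y m s)) (y m) (DD l m y)) ->
  (forall l m, cont_on (@everywhere N) (DD l m)) ->
  forall j k x, DD j k x = DD k j x.
Proof.
move=> hg hD hc j k x.
case: (eqVneq j k) => [->//|jk].
have kj : k != j by rewrite eq_sym.
apply: Rminus_diag_uniq.
suff: forall eps, 0 < eps -> Rabs (DD j k x - DD k j x) <= 2 * eps.
  move=> H; case: (Req_dec (DD j k x - DD k j x) 0) => // ne.
  have ap := Rabs_pos_lt _ ne.
  by have := H (Rabs (DD j k x - DD k j x) / 4) ltac:(lra); lra.
move=> eps e0.
have [e1 [e10 he1]] := cont_on_cball (hc j k) x e0.
have [e2 [e20 he2]] := cont_on_cball (hc k j) x e0.
pose eta := Rmin e1 e2 / 2.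
have eta0 : 0 < eta by have := Rmin_glb_lt _ _ _ e10 e20; rewrite /eta; lra.
have hc1 : forall y, cball x (2 * eta) y -> Rabs (DD j k y - DD j k x) <= eps.
  by move=> y hy; apply: he1; apply: cball_le hy; have := Rmin_l e1 e2; rewrite /eta; lra.
have hc2 : forall y, cball x (2 * eta) y -> Rabs (DD k j y - DD k j x) <= eps.
  by move=> y hy; apply: he2; apply: cball_le hy; have := Rmin_r e1 e2; rewrite /eta; lra.
have ae : Rabs eta = eta by rewrite Rabs_right; lra.
have A := @mixed_difference_le N g D DD j k x eps eta jk hg hD hc1 eta eta
  (Req_le _ _ ae) (Req_le _ _ ae).
have B := @mixed_difference_le N g D DD k j x eps eta kj hg hD hc2 eta eta
  (Req_le _ _ ae) (Req_le _ _ ae).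
rewrite (upd_comm _ _ _ kj) ae in B; rewrite ae in A.
set a := g (upd (upd x j (x j + eta)) k (x k + eta)) in A B.
set b := g (upd x j (x j + eta)) in A B.
set c := g (upd x k (x k + eta)) in A B.
have : Rabs (eta * eta * (DD j k x - DD k j x)) <= 2 * eps * (eta * eta).
  rewrite (_ : eta * eta * (DD j k x - DD k j x) =
    - (a - b - c + g x - eta * eta * DD j k x) + (a - c - b + g x - eta * eta * DD k j x)); last ring.
  by apply: Rle_trans (Rabs_triang _ _) _; rewrite Rabs_Ropp; lra.
rewrite Rabs_mult (Rabs_right (eta * eta)); last nra.
by move=> h; apply: (Rmult_le_reg_l (eta * eta)); [nra | lra].
Qed.

Lemma C3_partials N (g : vec N -> R) : Ck_on (@everywhere N) 3 g ->
  exists (D1 : 'I_N -> vec N -> R) (D2 : 'I_N -> 'I_N -> vec N -> R)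
         (D3 : 'I_N -> 'I_N -> 'I_N -> vec N -> R),
  (forall y l, derivable_pt_lim (fun s => g (upd y l s)) (y l) (D1 l y)) /\
  (forall y l m, derivable_pt_lim (fun s => D1 l (upd y m s)) (y m) (D2 l m y)) /\
  (forall y l m o, derivable_pt_lim (fun s => D2 l m (upd y o s)) (y o) (D3 l m o y)) /\
  (forall l, cont_on (@everywhere N) (D1 l)) /\
  (forall l m, cont_on (@everywhere N) (D2 l m)) /\
  (forall l m o, cont_on (@everywhere N) (D3 l m o)).
Proof.
move=> [_ h].
have [D1 hD1] := @IndefiniteDescription.functional_choice _ _ _ h.
have [D2 hD2] := @IndefiniteDescription.functional_choice ('I_N * 'I_N)%type _ _
  (fun jk => (proj2 (proj2 (hD1 jk.1))) jk.2).
have [D3 hD3] := @IndefiniteDescription.functional_choice ('I_N * 'I_N * 'I_N)%type _ _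
  (fun jkl => (proj2 (proj2 (hD2 jkl.1))) jkl.2).
exists D1, (fun l m => D2 (l, m)), (fun l m o => D3 (l, m, o)).
split; first by move=> y l; exact: (proj1 (hD1 l) y I).
split; first by move=> y l m; exact: (proj1 (hD2 (l, m)) y I).
split; first by move=> y l m o; exact: (proj1 (hD3 (l, m, o)) y I).
split; first by move=> l; exact: (proj1 (proj2 (hD1 l))).
split; first by move=> l m; exact: (proj1 (proj2 (hD2 (l, m)))).
by move=> l m o; exact: (proj2 (hD3 (l, m, o))).
Qed.

(** * Extended phase space *)

Definition qcoord {n} (i : 'I_n) : 'I_(n + n + 1) := lshift 1 (lshift n i).
Definition pcoord {n} (i : 'I_n) : 'I_(n + n + 1) := lshift 1 (rshift n i).
Definition tcoord {n} : 'I_(n + n + 1) := rshift (n + n) ord0.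

Definition pack {n} (q p : vec n) (t : R) : vec (n + n + 1) := fun k =>
  match fintype.split k with
  | inl k1 => match fintype.split k1 with inl i => q i | inr i => p i end
  | inr _ => t
  end.

Lemma pack_q n (q p : vec n) t i : pack q p t (qcoord i) = q i.
Proof. by rewrite /pack /qcoord !(unsplitK (inl _)). Qed.

Lemma pack_p n (q p : vec n) t i : pack q p t (pcoord i) = p i.
Proof. by rewrite /pack /pcoord (unsplitK (inl _)) (unsplitK (inr _)). Qed.

Lemma pack_t n (q p : vec n) t : pack q p t tcoord = t.
Proof. by rewrite /pack /tcoord (unsplitK (inr _)). Qed.

Lemma coord_cases n (k : 'I_(n + n + 1)) :
  (exists i, k = qcoord i) \/ (exists i, k = pcoord i) \/ k = tcoord.
Proof.
rewrite -(splitK k); case: (fintype.split k) => [k1|k2] /=.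
- rewrite -(splitK k1); case: (fintype.split k1) => [i|i] /=.
  + by left; exists i.
  + by right; left; exists i.
- by right; right; rewrite /tcoord (ord1 k2).
Qed.

Lemma Hpack_pack n (H : vec n -> vec n -> R -> R) q p t : Hpack H (pack q p t) = H q p t.
Proof.
rewrite /Hpack; congr H; try apply: functional_extensionality => i.
- exact: pack_q.
- exact: pack_p.
- exact: (pack_t q p t).
Qed.

Lemma pack_ext n (x : vec (n + n + 1)) :
  pack (fun i => x (qcoord i)) (fun i => x (pcoord i)) (x tcoord) = x.
Proof.
apply: functional_extensionality => k.
by case: (coord_cases k) => [[i ->]|[[i ->]| ->]]; rewrite ?pack_q ?pack_p ?pack_t.
Qed.

Lemma upd_pack_q n (q p : vec n) t i s : upd (pack q p t) (qcoord i) s = pack (upd q i s) p t.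
Proof.
rewrite -[upd (pack q p t) _ s]pack_ext; congr pack; last first.
  by rewrite /upd pack_t -(inj_eq val_inj) /=; case: eqP => // e; have := ltn_ord i; lia.
all: apply: functional_extensionality => j; rewrite /upd ?pack_q ?pack_p -(inj_eq val_inj) /=.
- by case: eqP => // e; have := ltn_ord i; lia.
- by [].
Qed.

Lemma upd_pack_p n (q p : vec n) t i s : upd (pack q p t) (pcoord i) s = pack q (upd p i s) t.
Proof.
rewrite -[upd (pack q p t) _ s]pack_ext; congr pack; last first.
  by rewrite /upd pack_t -(inj_eq val_inj) /=; case: eqP => // e; have := ltn_ord i; lia.
all: apply: functional_extensionality => j; rewrite /upd ?pack_q ?pack_p -(inj_eq val_inj) /=.
- by rewrite eqn_add2l (inj_eq val_inj).
- by case: eqP => // e; have := ltn_ord j; lia.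
Qed.

Lemma rsum_coords n (F : 'I_(n + n + 1) -> R) :
  rsum F = rsum (fun i => F (qcoord i)) + rsum (fun i => F (pcoord i)) + F tcoord.
Proof. by rewrite !rsum_split_ord /rsum big_ord1. Qed.

Lemma pack_dist_le n (q p q' p' : vec n) t t' r :
  (forall i, Rabs (q i - q' i) <= r) -> (forall i, Rabs (p i - p' i) <= r) -> Rabs (t - t') <= r ->
  forall j, Rabs (pack q p t j - pack q' p' t' j) <= r.
Proof.
move=> hq hp ht j.
by case: (coord_cases j) => [[i ->]|[[i ->]| ->]]; rewrite ?pack_q ?pack_p ?pack_t.
Qed.

Lemma derivable_pt_lim_pack n (A B : R -> vec n) (C : R -> R) (dA dB : vec n) dC s0 :
  (forall i, derivable_pt_lim (fun s => A s i) s0 (dA i)) ->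
  (forall i, derivable_pt_lim (fun s => B s i) s0 (dB i)) ->
  derivable_pt_lim C s0 dC ->
  forall k, derivable_pt_lim (fun s => pack (A s) (B s) (C s) k) s0 (pack dA dB dC k).
Proof.
move=> hA hB hC k; case: (coord_cases k) => [[i ->]|[[i ->]| ->]].
- by rewrite pack_q; apply: (derivable_pt_lim_ext _ _ _ _ _ (hA i)) => s; rewrite pack_q.
- by rewrite pack_p; apply: (derivable_pt_lim_ext _ _ _ _ _ (hB i)) => s; rewrite pack_p.
- by rewrite pack_t; apply: (derivable_pt_lim_ext _ _ _ _ _ hC) => s; rewrite pack_t.
Qed.

Section HamiltonianPartials.
Variables (n : nat) (H : vec n -> vec n -> R -> R) (Hq Hp : vec n -> vec n -> R -> vec n).
Variable D1 : 'I_(n + n + 1) -> vec (n + n + 1) -> R.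
Hypothesis HD1 : forall y l, derivable_pt_lim (fun s => Hpack H (upd y l s)) (y l) (D1 l y).

Lemma Hq_partial :
  (forall q p t i, derivable_pt_lim (fun s => H (upd q i s) p t) (q i) (Hq q p t i)) ->
  forall q p t i, Hq q p t i = D1 (qcoord i) (pack q p t).
Proof.
move=> hH q p t i; have := HD1 (pack q p t) (qcoord i).
under [fun s => _]functional_extensionality => s do rewrite upd_pack_q Hpack_pack.
by rewrite pack_q; exact: uniqueness_limite (hH q p t i).
Qed.

Lemma Hp_partial :
  (forall q p t i, derivable_pt_lim (fun s => H q (upd p i s) t) (p i) (Hp q p t i)) ->
  forall q p t i, Hp q p t i = D1 (pcoord i) (pack q p t).
Proof.
move=> hH q p t i; have := HD1 (pack q p t) (pcoord i).
under [fun s => _]functional_extensionality => s do rewrite upd_pack_p Hpack_pack.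
by rewrite pack_p; exact: uniqueness_limite (hH q p t i).
Qed.

End HamiltonianPartials.

(** * Symplecticity *)

Definition dotv {n} (x y : vec n) : R := rsum (fun i => x i * y i).

Section LinearizedSteps.
Variables (n : nat) (S : 'I_(n + n + 1) -> 'I_(n + n + 1) -> R).
Hypothesis S_sym : forall l m, S l m = S m l.

Definition hess_apply l (a b : vec n) : R :=
  rsum (fun j => S l (qcoord j) * a j) + rsum (fun j => S l (pcoord j) * b j).

Definition hess_cross (a b a' b' : vec n) : R :=
  rsum (fun i => b i * hess_apply (pcoord i) a' b' - hess_apply (qcoord i) a b * a' i).

Lemma hess_cross_expand a b a' b' :
  hess_cross a b a' b' =
    rsum (fun i => rsum (fun j => b i * S (pcoord i) (qcoord j) * a' j))
  + rsum (fun i => rsum (fun j => b i * S (pcoord i) (pcoord j) * b' j))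
  - rsum (fun i => rsum (fun j => a' i * S (qcoord i) (qcoord j) * a j))
  - rsum (fun i => rsum (fun j => S (qcoord i) (pcoord j) * b j * a' i)).
Proof.
rewrite -rsumD -!rsumB /hess_cross; apply: eq_rsum => i; rewrite /hess_apply.
rewrite Rmult_plus_distr_l Rmult_plus_distr_r -!rsumZ -!rsumZr.
rewrite (_ : forall x y z w : R, x + y - (z + w) = x + y - z - w); last by move=> *; ring.
by congr (_ + _ - _ - _); apply: eq_rsum => j; ring.
Qed.

Lemma hess_cross_sym a b a' b' : hess_cross a b a' b' = hess_cross a' b' a b.
Proof.
rewrite !hess_cross_expand.
have mixed : forall x y x' : vec n,
    rsum (fun i => rsum (fun j => S (qcoord i) (pcoord j) * y j * x' i)) =
    rsum (fun i => rsum (fun j => y i * S (pcoord i) (qcoord j) * x' j)).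
  move=> x y x'; rewrite exchange_rsum; apply: eq_rsum => i; apply: eq_rsum => j.
  by rewrite S_sym; ring.
rewrite (mixed a b a') (mixed a' b' a).
have diag : forall (f : 'I_n -> 'I_(n + n + 1)) (x y : vec n),
    rsum (fun i => rsum (fun j => x i * S (f i) (f j) * y j)) =
    rsum (fun i => rsum (fun j => y i * S (f i) (f j) * x j)).
  move=> f x y; rewrite exchange_rsum; apply: eq_rsum => i; apply: eq_rsum => j.
  by rewrite S_sym; ring.
by rewrite (diag pcoord b b') (diag qcoord a' a); ring.
Qed.

(* Linearized second half-step, implicit in P. *)
Lemma implicit_P_step_sympl c (dq dp dP dQ dq' dp' dP' dQ' : vec n) :
  (forall i, dP i = dp i - c * hess_apply (qcoord i) dq dP) ->
  (forall i, dQ i = dq i + c * hess_apply (pcoord i) dq dP) ->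
  (forall i, dP' i = dp' i - c * hess_apply (qcoord i) dq' dP') ->
  (forall i, dQ' i = dq' i + c * hess_apply (pcoord i) dq' dP') ->
  dotv dP dQ' - dotv dP' dQ = dotv dp dq' - dotv dp' dq.
Proof.
move=> h1 h2 h3 h4.
have E : forall x y y0 x' x0' y' : vec n,
    (forall i, y i = y0 i - c * hess_apply (qcoord i) x y) ->
    (forall i, x' i = x0' i + c * hess_apply (pcoord i) x0' y') ->
    dotv y x' = dotv y0 x0' + c * hess_cross x y x0' y'.
  move=> x y y0 x' x0' y' e1 e2.
  by rewrite /dotv /hess_cross -rsumZ -rsumD; apply: eq_rsum => i; rewrite e2 e1; ring.
by rewrite (E _ _ _ _ _ _ h1 h4) (E _ _ _ _ _ _ h3 h2) (hess_cross_sym dq); ring.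
Qed.

(* Linearized first half-step, implicit in q. *)
Lemma implicit_q_step_sympl c (da db dq dp da' db' dq' dp' : vec n) :
  (forall i, dq i = da i + c * hess_apply (pcoord i) dq db) ->
  (forall i, dp i = db i - c * hess_apply (qcoord i) dq db) ->
  (forall i, dq' i = da' i + c * hess_apply (pcoord i) dq' db') ->
  (forall i, dp' i = db' i - c * hess_apply (qcoord i) dq' db') ->
  dotv dp dq' - dotv dp' dq = dotv db da' - dotv db' da.
Proof.
move=> h1 h2 h3 h4.
have E : forall x y y0 x' x0' y0' : vec n,
    (forall i, y i = y0 i - c * hess_apply (qcoord i) x y0) ->
    (forall i, x' i = x0' i + c * hess_apply (pcoord i) x' y0') ->
    dotv y x' = dotv y0 x0' + c * hess_cross x y0 x' y0'.
  move=> x y y0 x' x0' y0' e1 e2.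
  by rewrite /dotv /hess_cross -rsumZ -rsumD; apply: eq_rsum => i; rewrite e2 e1; ring.
by rewrite (E _ _ _ _ _ _ h2 h3) (E _ _ _ _ _ _ h4 h1) (hess_cross_sym dq); ring.
Qed.

End LinearizedSteps.

Lemma open_line_nbhd N (U : vec N -> Prop) z (w : vec N) : is_open U -> U z ->
  exists eta, 0 < eta /\ forall s, Rabs (s - 0) < eta -> U (fun k => z k + s * w k).
Proof.
move=> hU hz; have [d [d0 hd]] := hU z hz.
have [Wb [Wb1 hW]] := finite_upper_bound (fun k : 'I_N => Rabs (w k)).
exists (d / Wb); split; first by apply: Rdiv_lt_0_compat; lra.
move=> s; rewrite Rminus_0_r => hs; apply: hd => k.
rewrite (_ : z k + s * w k - z k = s * w k) ?Rabs_mult; last ring.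
have : Rabs s * Wb < d.
  have := Rmult_lt_compat_r Wb _ _ ltac:(lra) hs.
  by rewrite (_ : d / Wb * Wb = d) //; field; lra.
by have := hW k; have := Rabs_pos s; have := Rabs_pos (w k); nra.
Qed.

Lemma C1_dirder_exists N (U : vec N -> Prop) (g : vec N -> R) z : is_open U -> Ck_on U 1 g -> U z ->
  forall w, exists l, dirder g z w l.
Proof.
move=> hU [_ hg] hz w.
have [D hD] := @IndefiniteDescription.functional_choice _ _ _ hg.
have [d [d0 hd]] := hU z hz.
exists (rsum (fun k => D k z * w k)).
have hf := @frechet_of_partials N g D z (d / 2) ltac:(lra)
  (fun y hy k => proj1 (hD k) y (hd y (fun j => ltac:(have := hy j; lra)))).
have {}hf : forall eps, 0 < eps -> exists e, 0 < e /\ forall x rho, 0 <= rho <= e -> cball z rho x ->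
    Rabs (g x - g z - rsum (fun k => D k z * (x k - z k))) <= eps * rho.
  apply: hf => k eps ep.
  have [d' [d'0 hd']] := proj2 (hD k) z hz eps ep.
  exists (Rmin d' d / 2); split; first by have := Rmin_glb_lt _ _ _ d'0 d0; lra.
  move=> y hy; apply: Rlt_le; apply: hd'.
  + by apply: hd => j; have := hy j; have := Rmin_r d' d; lra.
  + by move=> j; have := hy j; have := Rmin_l d' d; lra.
rewrite /dirder; apply: chain_rule_frechet hf _ _.
- by apply: functional_extensionality => k; ring.
- by move=> k; exact: derivable_pt_lim_affine.
Qed.

Section SchemeSymplectic.
Variables (n : nat) (Hq Hp : vec n -> vec n -> R -> vec n).
Variables (D1 : 'I_(n + n + 1) -> vec (n + n + 1) -> R)
          (D2 : 'I_(n + n + 1) -> 'I_(n + n + 1) -> vec (n + n + 1) -> R).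
Hypothesis hD2 : forall y l m, derivable_pt_lim (fun s => D1 l (upd y m s)) (y m) (D2 l m y).
Hypothesis hc2 : forall l m, cont_on (@everywhere _) (D2 l m).
Hypothesis D2_sym : forall l m y, D2 l m y = D2 m l y.
Hypothesis eHp : forall q p t i, Hp q p t i = D1 (pcoord i) (pack q p t).
Hypothesis eHq : forall q p t i, Hq q p t i = D1 (qcoord i) (pack q p t).

Lemma derivable_pt_lim_D1_pack l (A B : R -> vec n) (dA dB : vec n) t s0 :
  (forall i, derivable_pt_lim (fun s => A s i) s0 (dA i)) ->
  (forall i, derivable_pt_lim (fun s => B s i) s0 (dB i)) ->
  derivable_pt_lim (fun s => D1 l (pack (A s) (B s) t)) s0
     (hess_apply (fun l m => D2 l m (pack (A s0) (B s0) t)) l dA dB).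
Proof.
move=> hA hB.
have := chain_rule (fun y m => hD2 y l m) (hc2 l)
  (derivable_pt_lim_pack hA hB (derivable_pt_lim_const t s0)).
rewrite rsum_coords pack_t Rmult_0_r Rplus_0_r /hess_apply.
by under eq_rsum => i do rewrite pack_q; under [X in _ + X]eq_rsum => i do rewrite pack_p.
Qed.

Variables (h t0 a : R) (U : vec (n + n) -> Prop) (qf Pf : vec (n + n) -> vec n).
Hypothesis U_open : is_open U.
Hypothesis qf_C1 : forall i, Ck_on U 1 (fun z => qf z i).
Hypothesis Pf_C1 : forall i, Ck_on U 1 (fun z => Pf z i).
Hypothesis qf_Pf_solve : forall z, U z ->
  step_eqs Hq Hp h t0 a (fst_half z) (snd_half z) (qf z) (Pf z).
Variable z : vec (n + n).
Hypothesis Uz : U z.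

Let S1 l m := D2 l m (pack (qf z) (snd_half z) (t0 + a * h)).
Let S2 l m := D2 l m (pack (qf z) (Pf z) (t0 + (1 - a) * h)).

Lemma scheme_linearization (w : vec (n + n)) : exists dq dP : vec n,
  (forall i, dirder (fun y => Pf y i) z w (dP i)) /\
  (forall i, dq i = fst_half w i + h / 2 * hess_apply S1 (pcoord i) dq (snd_half w)) /\
  (forall i, dP i = (snd_half w i - h / 2 * hess_apply S1 (qcoord i) dq (snd_half w))
                    - h / 2 * hess_apply S2 (qcoord i) dq dP) /\
  (forall i, dirder (fun y => step_Q Hp h t0 a (qf y) (Pf y) i) z w
                    (dq i + h / 2 * hess_apply S2 (pcoord i) dq dP)).
Proof.
have [dq hdq] := IndefiniteDescription.functional_choice _
  (fun i => C1_dirder_exists U_open (qf_C1 i) Uz w).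
have [dP hdP] := IndefiniteDescription.functional_choice _
  (fun i => C1_dirder_exists U_open (Pf_C1 i) Uz w).
exists dq, dP.
pose Z s : vec (n + n) := fun k => z k + s * w k.
have eZ0 : Z 0 = z by apply: functional_extensionality => k; rewrite /Z; ring.
have hqd : forall i, derivable_pt_lim (fun s => qf (Z s) i) 0 (dq i) by exact: hdq.
have hPd : forall i, derivable_pt_lim (fun s => Pf (Z s) i) 0 (dP i) by exact: hdP.
have hbd : forall i, derivable_pt_lim (fun s => snd_half (Z s) i) 0 (snd_half w i).
  by move=> i; exact: derivable_pt_lim_affine.
have had : forall i, derivable_pt_lim (fun s => fst_half (Z s) i) 0 (fst_half w i).
  by move=> i; exact: derivable_pt_lim_affine.
have [eta [eta0 heta]] := open_line_nbhd w U_open Uz.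
have c1 := fun l => derivable_pt_lim_D1_pack l (t0 + a * h) hqd hbd.
have c2 := fun l => derivable_pt_lim_D1_pack l (t0 + (1 - a) * h) hqd hPd.
rewrite eZ0 -/S1 in c1; rewrite eZ0 -/S2 in c2.
split; first exact: hdP.
split.
  move=> i; apply: (uniqueness_limite (fun s => qf (Z s) i)) (hqd i) _.
  apply: (derivable_pt_lim_locally_eq eta0 (f := fun s => fst_half (Z s) i + h / 2 *
     D1 (pcoord i) (pack (qf (Z s)) (snd_half (Z s)) (t0 + a * h)))).
    by move=> s hs; have [e1 _] := qf_Pf_solve (heta s hs); rewrite e1 eHp.
  by apply: derivable_pt_lim_plus => //; apply: derivable_pt_lim_scal; exact: c1.
split.
  move=> i; apply: (uniqueness_limite (fun s => Pf (Z s) i)) (hPd i) _.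
  apply: (derivable_pt_lim_locally_eq eta0 (f := fun s =>
     (snd_half (Z s) i - h / 2 * D1 (qcoord i) (pack (qf (Z s)) (snd_half (Z s)) (t0 + a * h)))
     - h / 2 * D1 (qcoord i) (pack (qf (Z s)) (Pf (Z s)) (t0 + (1 - a) * h)))).
    by move=> s hs; have [_ e2] := qf_Pf_solve (heta s hs); rewrite e2 /step_p !eHq.
  apply: derivable_pt_lim_minus; last by apply: derivable_pt_lim_scal; exact: c2.
  by apply: derivable_pt_lim_minus => //; apply: derivable_pt_lim_scal; exact: c1.
move=> i; rewrite /dirder -/Z.
apply: (derivable_pt_lim_ext (fun s => qf (Z s) i + h / 2 *
   D1 (pcoord i) (pack (qf (Z s)) (Pf (Z s)) (t0 + (1 - a) * h)))).
  by move=> s; rewrite /step_Q eHp.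
by apply: derivable_pt_lim_plus => //; apply: derivable_pt_lim_scal; exact: c2.
Qed.

Lemma scheme_symplectic (u v : vec (n + n)) :
  exists dQu dQv dPu dPv : vec n,
    (forall i, dirder (fun w => step_Q Hp h t0 a (qf w) (Pf w) i) z u (dQu i)) /\
    (forall i, dirder (fun w => step_Q Hp h t0 a (qf w) (Pf w) i) z v (dQv i)) /\
    (forall i, dirder (fun w => Pf w i) z u (dPu i)) /\
    (forall i, dirder (fun w => Pf w i) z v (dPv i)) /\
    rsum (fun i => dPu i * dQv i - dPv i * dQu i) =
    rsum (fun i => snd_half u i * fst_half v i - snd_half v i * fst_half u i).
Proof.
have [dqu [dPu [hPu [Au [Bu Cu]]]]] := scheme_linearization u.
have [dqv [dPv [hPv [Av [Bv Cv]]]]] := scheme_linearization v.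
exists (fun i => dqu i + h / 2 * hess_apply S2 (pcoord i) dqu dPu),
       (fun i => dqv i + h / 2 * hess_apply S2 (pcoord i) dqv dPv), dPu, dPv.
do 4 (split => //).
have sym1 : forall l m, S1 l m = S1 m l by move=> l m; exact: D2_sym.
have sym2 : forall l m, S2 l m = S2 m l by move=> l m; exact: D2_sym.
rewrite !rsumB.
have := implicit_P_step_sympl sym2 Bu (fun _ => erefl) Bv (fun _ => erefl); rewrite /dotv => ->.
by have := implicit_q_step_sympl sym1 Au (fun _ => erefl) Av (fun _ => erefl); rewrite /dotv.
Qed.

End SchemeSymplectic.

(** * Taylor estimates along curves and contractions *)

Lemma derivable_pt_lim_shift (f : R -> R) t0 s l : derivable_pt_lim f (t0 + s) l ->
  derivable_pt_lim (fun s0 => f (t0 + s0)) s l.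
Proof.
move=> h eps e0; have [dl hd] := h eps e0; exists dl => hh hn ha.
by rewrite -Rplus_assoc; exact: hd.
Qed.

Lemma derivable_pt_lim_increment_le (f : R -> R) x l : derivable_pt_lim f x l ->
  exists eta, 0 < eta /\
    forall hh, Rabs hh < eta -> Rabs (f (x + hh) - f x) <= (Rabs l + 1) * Rabs hh.
Proof.
move=> h; have [dl hd] := h 1 ltac:(lra).
exists dl; split; first exact: cond_pos.
move=> hh ha; case: (Req_dec hh 0) => [->|hn].
  by rewrite Rplus_0_r Rminus_diag Rabs_R0; lra.
have H := hd hh hn ha.
rewrite (_ : f (x + hh) - f x = ((f (x + hh) - f x) / hh - l) * hh + l * hh); last by field.
apply: Rle_trans (Rabs_triang _ _) _; rewrite !Rabs_mult.
by have := Rabs_pos hh; nra.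
Qed.

Lemma taylor_ode1 (F G : R -> R) F0 G0 s Lc : 0 <= s -> 0 <= Lc ->
  (forall sg, 0 <= sg <= s -> derivable_pt_lim F sg (G sg)) -> F 0 = F0 ->
  (forall sg, 0 <= sg <= s -> Rabs (G sg - G0) <= Lc * sg) ->
  Rabs (F s - F0 - s * G0) <= Lc * (s * s).
Proof.
move=> s0 L0 hd hF hG.
have := @mean_value_ineq (fun sg => F sg - sg * G0) (fun sg => G sg - G0) 0 s (Lc * s) s0.
rewrite hF Rmult_0_l !Rminus_0_r (_ : Lc * s * s = Lc * (s * s)); last ring.
rewrite (_ : F s - s * G0 - F0 = F s - F0 - s * G0); last ring.
apply.
- move=> sg hsg.
  have := derivable_pt_lim_minus _ _ _ _ _ (hd sg hsg) (derivable_pt_lim_affine 0 G0 sg).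
  by apply: derivable_pt_lim_ext => x; rewrite /minus_fct; ring.
- move=> sg hsg; have := hG sg hsg.
  have : Lc * sg <= Lc * s by apply: Rmult_le_compat_l; lra.
  lra.
Qed.

Lemma taylor_ode2 (F G : R -> R) F0 G0 G1 s Lc : 0 <= s -> 0 <= Lc ->
  (forall sg, 0 <= sg <= s -> derivable_pt_lim F sg (G sg)) -> F 0 = F0 ->
  (forall sg, 0 <= sg <= s -> Rabs (G sg - G0 - sg * G1) <= Lc * (sg * sg)) ->
  Rabs (F s - F0 - s * G0 - s * s / 2 * G1) <= Lc * (s * s * s).
Proof.
move=> s0 L0 hd hF hG.
have := @mean_value_ineq (fun sg => F sg - sg * G0 - sg * sg * (G1 / 2))
  (fun sg => G sg - G0 - sg * G1) 0 s (Lc * (s * s)) s0.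
rewrite hF !Rmult_0_l !Rminus_0_r (_ : Lc * (s * s) * s = Lc * (s * s * s)); last ring.
rewrite (_ : F s - s * G0 - s * s * (G1 / 2) - F0 = F s - F0 - s * G0 - s * s / 2 * G1); last field.
apply.
- move=> sg hsg.
  have hsq : derivable_pt_lim (fun x => x * x * (G1 / 2)) sg (sg * G1).
    have := derivable_pt_lim_scal _ (G1 / 2) sg _
      (derivable_pt_lim_mult id id sg 1 1 (derivable_pt_lim_id sg) (derivable_pt_lim_id sg)).
    rewrite (_ : G1 / 2 * (1 * id sg + id sg * 1) = sg * G1); last by rewrite /id; field.
    by apply: derivable_pt_lim_ext => x; rewrite /mult_real_fct /mult_fct /id; ring.
  have := derivable_pt_lim_minus _ _ _ _ _
    (derivable_pt_lim_minus _ _ _ _ _ (hd sg hsg) (derivable_pt_lim_affine 0 G0 sg)) hsq.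
  by apply: derivable_pt_lim_ext => x; rewrite /minus_fct; ring.
- move=> sg hsg; have := hG sg hsg.
  have : Lc * (sg * sg) <= Lc * (s * s) by apply: Rmult_le_compat_l => //; nra.
  lra.
Qed.

Lemma Un_cv_dist_le (v : nat -> R) L a b m : Un_cv v L ->
  (forall p, (m <= p)%nat -> Rabs (v p - a) <= b) -> Rabs (L - a) <= b.
Proof.
move=> hv hb; apply: Rnot_lt_le => hlt.
have [N hN] := hv (Rabs (L - a) - b) ltac:(lra).
have hp := hN (maxn N m) (leP (leq_maxl N m)).
have hq := hb (maxn N m) (leq_maxr N m).
rewrite /R_dist -Rabs_Ropp Ropp_minus_distr in hp.
have := Rabs_triang (L - v (maxn N m)) (v (maxn N m) - a).
by rewrite (_ : L - v (maxn N m) + (v (maxn N m) - a) = L - a); [lra | ring].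
Qed.

Section Contraction.
Variables (N : nat) (Phi : vec N -> vec N) (c : vec N) (rho k : R).
Hypotheses (rho0 : 0 <= rho) (k0 : 0 <= k) (k1 : k < 1).
Hypothesis Phi_ball : forall x, cball c rho x -> cball c rho (Phi x).
Hypothesis Phi_contr : forall x y r, 0 <= r -> cball c rho x -> cball c rho y ->
  (forall j, Rabs (x j - y j) <= r) -> forall j, Rabs (Phi x j - Phi y j) <= k * r.

Let u m := iter m Phi c.

Let u_ball m : cball c rho (u m).
Proof. by elim: m => [|m IH]; [exact: cball_center | rewrite /u iterS; exact: Phi_ball]. Qed.

Let u_step m j : Rabs (u m.+1 j - u m j) <= k ^ m * (2 * rho).
Proof.
elim: m j => [|m IH] j.
  rewrite /= Rmult_1_l; have := Phi_ball (u_ball 0) j; rewrite /u /=; lra.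
have := Phi_contr (Rmult_le_pos (k ^ m) (2 * rho) (pow_le _ m k0) ltac:(lra)) (u_ball _) (u_ball _) IH j.
by rewrite /u !iterS /= Rmult_assoc.
Qed.

Let u_dist m p j : (m <= p)%nat -> Rabs (u p j - u m j) <= 2 * rho * k ^ m / (1 - k).
Proof.
move=> /subnKC <-.
suff geo : forall i, Rabs (u (m + i) j - u m j) <= 2 * rho * (k ^ m - k ^ (m + i)) / (1 - k).
  apply: Rle_trans (geo _) _; apply: Rmult_le_compat_r.
    by apply: Rlt_le; apply: Rinv_0_lt_compat; lra.
  by have := pow_le k (m + (p - m)) k0; nra.
elim=> [|i IH].
  by rewrite addn0 !Rminus_diag Rabs_R0 Rmult_0_r /Rdiv Rmult_0_l; lra.
rewrite addnS; have := u_step (m + i) j.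
have := Rabs_triang (u (m + i).+1 j - u (m + i)%nat j) (u (m + i)%nat j - u m j).
rewrite (_ : u (m + i).+1 j - u (m + i)%nat j + (u (m + i)%nat j - u m j) = u (m + i).+1 j - u m j);
  last ring.
rewrite (_ : 2 * rho * (k ^ m - k ^ (m + i).+1) / (1 - k) =
   2 * rho * (k ^ m - k ^ (m + i)) / (1 - k) + k ^ (m + i) * (2 * rho)); first lra.
by rewrite /=; field; lra.
Qed.

Lemma contraction_fixpoint : exists x, cball c rho x /\ Phi x = x.
Proof.
have small : forall eps, 0 < eps -> exists m, 2 * rho * k ^ m / (1 - k) < eps.
  move=> eps e0.
  have [m hm] := pow_lt_1_zero k ltac:(rewrite Rabs_right; lra) (eps * (1 - k) / (2 * rho + 1))
    ltac:(apply: Rdiv_lt_0_compat; nra).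
  exists m; have := hm m (le_n m); rewrite Rabs_right; last by apply: Rle_ge; apply: pow_le.
  move=> hk; apply: (Rmult_lt_reg_r (1 - k)); first lra.
  rewrite (_ : 2 * rho * k ^ m / (1 - k) * (1 - k) = 2 * rho * k ^ m); last by field; lra.
  have : (2 * rho + 1) * k ^ m < eps * (1 - k).
    rewrite Rmult_comm; apply: (Rmult_lt_reg_r (/ (2 * rho + 1))).
      by apply: Rinv_0_lt_compat; lra.
    by rewrite Rmult_assoc Rinv_r ?Rmult_1_r; lra.
  by have := pow_le k m k0; nra.
have cau : forall j, Cauchy_crit (fun m => u m j).
  move=> j eps e0; have [m hm] := small (eps / 2) ltac:(lra).
  exists m => p q /leP hp /leP hq; rewrite /R_dist.
  have := u_dist j hp; have := u_dist j hq.
  have := Rabs_triang (u p j - u m j) (u m j - u q j); rewrite -(Rabs_Ropp (u m j - u q j)).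
  by rewrite (_ : u p j - u m j + (u m j - u q j) = u p j - u q j); [rewrite Ropp_minus_distr; lra | ring].
pose l : vec N := fun j => proj1_sig (R_complete _ (cau j)).
have hl : forall j, Un_cv (fun m => u m j) (l j) by move=> j; exact: proj2_sig (R_complete _ (cau j)).
have lu : forall m j, Rabs (l j - u m j) <= 2 * rho * k ^ m / (1 - k).
  by move=> m j; apply: (@Un_cv_dist_le _ _ _ _ m (hl j)) => p hp; exact: u_dist.
have lb : cball c rho l.
  by move=> j; apply: (@Un_cv_dist_le _ _ _ _ 0 (hl j)) => p _; exact: u_ball.
exists l; split => //; apply: functional_extensionality => j.
apply: Rminus_diag_uniq; case: (Req_dec (Phi l j - l j) 0) => // ne.
have pos := Rabs_pos_lt _ ne.
have [m hm] := small (Rabs (Phi l j - l j) / 2) ltac:(lra).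
have A0 : 0 <= 2 * rho * k ^ m / (1 - k).
  by apply: Rmult_le_pos; [have := pow_le k m k0; nra | apply: Rlt_le; apply: Rinv_0_lt_compat; lra].
have := Phi_contr A0 lb (u_ball m) (lu m) j.
have := lu m.+1 j; rewrite /u iterS -/(u m).
have := Rabs_triang (Phi l j - Phi (u m) j) (- (l j - Phi (u m) j)); rewrite Rabs_Ropp.
rewrite (_ : Phi l j - Phi (u m) j + - (l j - Phi (u m) j) = Phi l j - l j); last ring.
rewrite [2 * rho * k ^ m.+1 / (1 - k)](_ : _ = k * (2 * rho * k ^ m / (1 - k)));
  last by rewrite /=; field; lra.
nra.
Qed.

End Contraction.

(** * Second-order accuracy *)

Definition second_order_accurate n (Hq Hp : vec n -> vec n -> R -> vec n) (t0 a : R)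
    (alpha beta : vec n) (qt pt : R -> vec n) : Prop :=
  exists h0 r C : R, 0 < h0 /\ 0 < r /\
    (forall h, 0 < h < h0 ->
       exists q P : vec n, vball alpha r q /\ vball beta r P /\
         step_eqs Hq Hp h t0 a alpha beta q P) /\
    (forall (h : R) (q P : vec n), 0 < h < h0 ->
       vball alpha r q -> vball beta r P ->
       step_eqs Hq Hp h t0 a alpha beta q P ->
       forall i,
         Rabs (step_Q Hp h t0 a q P i - qt (t0 + h) i) <= C * pow h 3 /\
         Rabs (P i - pt (t0 + h) i) <= C * pow h 3).

Section SecondOrder.
Variables (n : nat) (Hq Hp : vec n -> vec n -> R -> vec n).
Variables (D1 : 'I_(n + n + 1) -> vec (n + n + 1) -> R)
          (D2 : 'I_(n + n + 1) -> 'I_(n + n + 1) -> vec (n + n + 1) -> R)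
          (D3 : 'I_(n + n + 1) -> 'I_(n + n + 1) -> 'I_(n + n + 1) -> vec (n + n + 1) -> R).
Hypothesis hD2 : forall y l m, derivable_pt_lim (fun s => D1 l (upd y m s)) (y m) (D2 l m y).
Hypothesis hD3 : forall y l m o, derivable_pt_lim (fun s => D2 l m (upd y o s)) (y o) (D3 l m o y).
Hypothesis eHp : forall q p t i, Hp q p t i = D1 (pcoord i) (pack q p t).
Hypothesis eHq : forall q p t i, Hq q p t i = D1 (qcoord i) (pack q p t).
Variables (t0 a : R) (alpha beta : vec n).
Variables (d B1 B2 B3 : R).
Hypotheses (d_gt0 : 0 < d) (B1_ge0 : 0 <= B1) (B2_ge0 : 0 <= B2) (B3_ge0 : 0 <= B3).
Hypothesis D1_le : forall l y, cball (pack alpha beta t0) d y -> Rabs (D1 l y) <= B1.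
Hypothesis D2_le : forall l m y, cball (pack alpha beta t0) d y -> Rabs (D2 l m y) <= B2.
Hypothesis D3_le : forall l m o y, cball (pack alpha beta t0) d y -> Rabs (D3 l m o y) <= B3.

Let x0 := pack alpha beta t0.
Let Mr := INR (n + n + 1).
Let Mr_ge0 : 0 <= Mr. Proof. exact: pos_INR. Qed.
Let x0_in : cball x0 d x0. Proof. by apply: cball_center; lra. Qed.

Definition ham_field (x : vec (n + n + 1)) : vec (n + n + 1) :=
  pack (fun i => D1 (pcoord i) x) (fun i => - D1 (qcoord i) x) 1.

(* DF(x0) v; the t-row vanishes because the last component of F is constant. *)
Definition ham_field_lin (v : vec (n + n + 1)) : vec (n + n + 1) :=
  pack (fun i => rsum (fun k => D2 (pcoord i) k x0 * v k))
       (fun i => - rsum (fun k => D2 (qcoord i) k x0 * v k)) 0.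

Definition taylor2 (s : R) : vec (n + n + 1) := fun j =>
  x0 j + s * ham_field x0 j + s * s / 2 * ham_field_lin (ham_field x0) j.

Lemma ham_field_lipschitz x y rho j : cball x0 d x -> cball x0 d y ->
  (forall k, Rabs (x k - y k) <= rho) -> Rabs (ham_field x j - ham_field y j) <= B2 * Mr * rho.
Proof.
move=> hx hy hxy; have rho0 : 0 <= rho by have := hxy tcoord; have := Rabs_pos (x tcoord - y tcoord); lra.
have lip l : Rabs (D1 l x - D1 l y) <= B2 * Mr * rho.
  exact: (lipschitz_cball (fun y0 m => hD2 y0 l m) (fun m y0 hy0 => D2_le l m hy0) hx hy hxy).
rewrite /ham_field; case: (coord_cases j) => [[i ->]|[[i ->]| ->]].
- by rewrite !pack_q.
- by rewrite !pack_p (_ : forall u v : R, - u - - v = - (u - v)) 1?Rabs_Ropp // => *; ring.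
- rewrite !pack_t Rminus_diag Rabs_R0; apply: Rmult_le_pos => //; exact: Rmult_le_pos.
Qed.

Lemma ham_field_lin_le v rho j : (forall k, Rabs (v k) <= rho) ->
  Rabs (ham_field_lin v j) <= Mr * (B2 * rho).
Proof.
move=> hv; have rho0 : 0 <= rho by have := hv tcoord; have := Rabs_pos (v tcoord); lra.
have row l : Rabs (rsum (fun k => D2 l k x0 * v k)) <= Mr * (B2 * rho).
  apply: Rle_trans (Rabs_rsum_le _) _; apply: rsum_le_const => k; rewrite Rabs_mult.
  by apply: Rmult_le_compat; try exact: Rabs_pos; [exact: D2_le | exact: hv].
rewrite /ham_field_lin; case: (coord_cases j) => [[i ->]|[[i ->]| ->]].
- by rewrite pack_q.
- by rewrite pack_p Rabs_Ropp.
- by rewrite pack_t Rabs_R0; apply: Rmult_le_pos => //; exact: Rmult_le_pos.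
Qed.

Lemma ham_field_lin_comb b1 b2 u1 u2 j :
  ham_field_lin (fun k => b1 * u1 k + b2 * u2 k) j =
  b1 * ham_field_lin u1 j + b2 * ham_field_lin u2 j.
Proof.
have row l : rsum (fun k => D2 l k x0 * (b1 * u1 k + b2 * u2 k)) =
    b1 * rsum (fun k => D2 l k x0 * u1 k) + b2 * rsum (fun k => D2 l k x0 * u2 k).
  by rewrite -!rsumZ -rsumD; apply: eq_rsum => k; ring.
rewrite /ham_field_lin; case: (coord_cases j) => [[i ->]|[[i ->]| ->]].
- by rewrite !pack_q row.
- by rewrite !pack_p row; ring.
- by rewrite !pack_t; ring.
Qed.

Lemma ham_field_lin_ext u1 u2 j : (forall k, u1 k = u2 k) -> ham_field_lin u1 j = ham_field_lin u2 j.
Proof. by move=> e; rewrite (functional_extensionality _ _ e). Qed.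

Lemma ham_field_taylor x rho j : 0 <= rho <= d -> cball x0 rho x ->
  Rabs (ham_field x j - ham_field x0 j - ham_field_lin (fun k => x k - x0 k) j) <=
  B3 * Mr * rho * Mr * rho.
Proof.
move=> hrho hx.
have tay l : Rabs (D1 l x - D1 l x0 - rsum (fun k => D2 l k x0 * (x k - x0 k))) <=
    B3 * Mr * rho * Mr * rho.
  exact: (taylor1_remainder_le (fun y0 m => hD2 y0 l m) (fun y0 m o => hD3 y0 l m o)
    (fun m o y0 hy0 => D3_le l m o hy0) hrho hx).
rewrite /ham_field /ham_field_lin; case: (coord_cases j) => [[i ->]|[[i ->]| ->]].
- by rewrite !pack_q.
- by rewrite !pack_p (_ : forall u v w : R, - u - - v - - w = - (u - v - w)) 1?Rabs_Ropp // => *; ring.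
- rewrite !pack_t (_ : 1 - 1 - 0 = 0); last ring.
  by rewrite Rabs_R0; repeat apply: Rmult_le_pos => //; lra.
Qed.


Section ExactFlow.
Variables (T : R) (qt pt : R -> vec n).
Hypotheses (T_gt0 : 0 < T) (qt0 : qt t0 = alpha) (pt0 : pt t0 = beta).
Hypothesis qt_deriv : forall t i, t0 - T < t < t0 + T ->
  derivable_pt_lim (fun s => qt s i) t (Hp (qt t) (pt t) t i).
Hypothesis pt_deriv : forall t i, t0 - T < t < t0 + T ->
  derivable_pt_lim (fun s => pt s i) t (- Hq (qt t) (pt t) t i).

Let z s := pack (qt (t0 + s)) (pt (t0 + s)) (t0 + s).

Let z0 : z 0 = x0. Proof. by rewrite /z Rplus_0_r qt0 pt0. Qed.

Lemma exact_flow_deriv s j : 0 <= s < T ->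
  derivable_pt_lim (fun sg => z sg j) s (ham_field (z s) j).
Proof.
move=> hs; have ht : t0 - T < t0 + s < t0 + T by lra.
rewrite /z /ham_field; case: (coord_cases j) => [[i ->]|[[i ->]| ->]].
- rewrite pack_q -eHp; under [fun sg => _]functional_extensionality => sg do rewrite pack_q.
  exact: derivable_pt_lim_shift (qt_deriv i ht).
- rewrite pack_p -eHq; under [fun sg => _]functional_extensionality => sg do rewrite pack_p.
  exact: derivable_pt_lim_shift (pt_deriv i ht).
- rewrite pack_t; under [fun sg => _]functional_extensionality => sg do rewrite pack_t.
  by apply: (derivable_pt_lim_ext _ _ _ _ _ (derivable_pt_lim_affine t0 1 s)) => sg; ring.
Qed.

Lemma exact_flow_lipschitz_start : exists h1 K, 0 < h1 /\ 0 <= K /\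
  forall s, 0 <= s < h1 -> cball x0 (K * s) (z s) /\ K * s <= d /\ s < T.
Proof.
have t0in : t0 - T < t0 < t0 + T by lra.
have [K [K1 hK]] := finite_upper_bound (fun i : 'I_n =>
  Rmax (Rabs (Hp (qt t0) (pt t0) t0 i) + 1) (Rabs (- Hq (qt t0) (pt t0) t0 i) + 1)).
pose P i e := forall s, Rabs s < e ->
  Rabs (qt (t0 + s) i - alpha i) <= K * Rabs s /\ Rabs (pt (t0 + s) i - beta i) <= K * Rabs s.
have radius : forall i, exists e, 0 < e /\ P i e.
  move=> i.
  have [e1 [e10 he1]] := derivable_pt_lim_increment_le (qt_deriv i t0in).
  have [e2 [e20 he2]] := derivable_pt_lim_increment_le (pt_deriv i t0in).
  exists (Rmin e1 e2); split; first exact: Rmin_glb_lt.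
  move=> s hs; have := Rmin_l e1 e2; have := Rmin_r e1 e2; have := hK i; have := Rabs_pos s.
  have := Rmax_l (Rabs (Hp (qt t0) (pt t0) t0 i) + 1) (Rabs (- Hq (qt t0) (pt t0) t0 i) + 1).
  have := Rmax_r (Rabs (Hp (qt t0) (pt t0) t0 i) + 1) (Rabs (- Hq (qt t0) (pt t0) t0 i) + 1).
  rewrite -qt0 -pt0 => m1 m2 as0 k e1m e2m.
  by have := he1 s ltac:(lra); have := he2 s ltac:(lra); split; nra.
have [eta [eta0 heta]] := @finite_min_radius _ P (fun i e e' hee H s hs => H s ltac:(lra)) radius.
pose h1 := Rmin (Rmin eta T) (d / (K + 1)).
have h1p : 0 < h1 by repeat apply: Rmin_glb_lt => //; apply: Rdiv_lt_0_compat; lra.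
exists h1, K; split => //; split; first lra.
move=> s [s0 sh].
have := Rmin_l (Rmin eta T) (d / (K + 1)); have := Rmin_r (Rmin eta T) (d / (K + 1)).
have := Rmin_l eta T; have := Rmin_r eta T; rewrite -/h1 => m1 m2 m3 m4.
have as0 : Rabs s = s by rewrite Rabs_right; lra.
have Ks : (K + 1) * s <= d.
  have : s <= d / (K + 1) by lra.
  move=> hs; have := Rmult_le_compat_l (K + 1) _ _ ltac:(lra) hs.
  by rewrite (_ : (K + 1) * (d / (K + 1)) = d); [lra | field; lra].
split; last by split; lra.
apply: pack_dist_le.
- by move=> i; have := heta i s ltac:(lra); rewrite as0; case.
- by move=> i; have := heta i s ltac:(lra); rewrite as0; case.
- by rewrite (_ : t0 + s - t0 = s) ?as0; [nra | ring].
Qed.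

Lemma exact_flow_taylor2 : exists h1 Ce, 0 < h1 /\ 0 <= Ce /\
  forall s, 0 <= s < h1 -> forall j, Rabs (z s j - taylor2 s j) <= Ce * (s * s * s).
Proof.
have [h1 [K [h1p [K0 hz]]]] := exact_flow_lipschitz_start.
have zd : forall s, 0 <= s < h1 -> cball x0 d (z s).
  by move=> s hs; have [hzs [hKs _]] := hz s hs; exact: cball_le hKs hzs.
have first : forall s, 0 <= s < h1 -> forall j,
    Rabs (z s j - x0 j - s * ham_field x0 j) <= B2 * Mr * K * (s * s).
  move=> s hs j; apply: (taylor_ode1 (F := fun sg => z sg j) (G := fun sg => ham_field (z sg) j)) => //; try lra.
  - by apply: Rmult_le_pos => //; exact: Rmult_le_pos.
  - by move=> sg hsg; apply: exact_flow_deriv; have := hz s hs; lra.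
  - by rewrite z0.
  - move=> sg hsg; have hsg' : 0 <= sg < h1 by lra.
    have [hzs _] := hz sg hsg'.
    by rewrite Rmult_assoc; apply: ham_field_lipschitz (zd sg hsg') x0_in hzs.
pose Ce := B3 * Mr * K * Mr * K + Mr * (B2 * (B2 * Mr * K)).
exists h1, Ce; split => //; split.
  by rewrite /Ce; apply: Rplus_le_le_0_compat; repeat apply: Rmult_le_pos.
move=> s hs j; rewrite /taylor2.
rewrite (_ : z s j - _ = z s j - x0 j - s * ham_field x0 j - s * s / 2 * ham_field_lin (ham_field x0) j);
  last ring.
apply: (taylor_ode2 (F := fun sg => z sg j) (G := fun sg => ham_field (z sg) j)) => //; try lra.
- by rewrite /Ce; apply: Rplus_le_le_0_compat; repeat apply: Rmult_le_pos.
- by move=> sg hsg; apply: exact_flow_deriv; have := hz s hs; lra.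
- by rewrite z0.
- move=> sg hsg; have hsg' : 0 <= sg < h1 by lra.
  have [hzs [hKs _]] := hz sg hsg'.
  have t1 := ham_field_taylor j (conj (Rmult_le_pos _ _ K0 (proj1 hsg)) hKs) hzs.
  have t2 := @ham_field_lin_le (fun k => z sg k - x0 k - sg * ham_field x0 k) _ j (first sg hsg').
  rewrite (@ham_field_lin_ext _ (fun k => 1 * (z sg k - x0 k) + (- sg) * ham_field x0 k)) in t2;
    last by move=> k; ring.
  rewrite ham_field_lin_comb in t2.
  rewrite (_ : ham_field (z sg) j - ham_field x0 j - sg * ham_field_lin (ham_field x0) j =
    (ham_field (z sg) j - ham_field x0 j - ham_field_lin (fun k => z sg k - x0 k) j) +
    (1 * ham_field_lin (fun k => z sg k - x0 k) j + - sg * ham_field_lin (ham_field x0) j));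
    last ring.
  apply: Rle_trans (Rabs_triang _ _) _; rewrite /Ce.
  have : B3 * Mr * (K * sg) * Mr * (K * sg) = B3 * Mr * K * Mr * K * (sg * sg) by ring.
  have : Mr * (B2 * (B2 * Mr * K * (sg * sg))) = Mr * (B2 * (B2 * Mr * K)) * (sg * sg) by ring.
  lra.
Qed.
End ExactFlow.


Definition small_step h := 0 < h /\ h <= d / 4 /\ B1 * h <= d / 4 /\
  Rabs a * h <= d / 4 /\ Rabs (1 - a) * h <= d / 4 /\ h * (B2 * Mr) <= 1.

Lemma small_step_near0 : exists h1, 0 < h1 /\ forall h, 0 < h < h1 -> small_step h.
Proof.
pose K := B1 + Rabs a + Rabs (1 - a) + 1.
have K1 : 1 <= K by have := Rabs_pos a; have := Rabs_pos (1 - a); rewrite /K; lra.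
have BM : 0 <= B2 * Mr by exact: Rmult_le_pos.
exists (Rmin (d / (4 * K)) (1 / (B2 * Mr + 1))).
split; first by apply: Rmin_glb_lt; apply: Rdiv_lt_0_compat; lra.
move=> h [h0 hh].
have hK : K * h <= d / 4.
  have : h <= d / (4 * K) by have := Rmin_l (d / (4 * K)) (1 / (B2 * Mr + 1)); lra.
  move=> hd; have := Rmult_le_compat_l K _ _ ltac:(lra) hd.
  by rewrite (_ : K * (d / (4 * K)) = d / 4); [lra | field; lra].
have hB : (B2 * Mr + 1) * h <= 1.
  have : h <= 1 / (B2 * Mr + 1) by have := Rmin_r (d / (4 * K)) (1 / (B2 * Mr + 1)); lra.
  move=> hd; have := Rmult_le_compat_l (B2 * Mr + 1) _ _ ltac:(lra) hd.
  by rewrite (_ : (B2 * Mr + 1) * (1 / (B2 * Mr + 1)) = 1); [lra | field; lra].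
have := Rmult_le_pos _ _ (Rabs_pos a) (Rlt_le _ _ h0).
have := Rmult_le_pos _ _ (Rabs_pos (1 - a)) (Rlt_le _ _ h0).
have := Rmult_le_pos _ _ B1_ge0 (Rlt_le _ _ h0).
rewrite /K in hK; rewrite /small_step; repeat split; nra.
Qed.

Let K1 := B1 + Rabs a + Rabs (1 - a) + 1.
Let Cs := B3 * Mr * K1 * Mr * K1 + Mr * (B2 * (B2 * Mr * K1)).

Section Step.
Variable h : R.
Hypothesis hsmall : small_step h.

Let h_gt0 : 0 < h. Proof. by case: hsmall. Qed.

Let w1_in q : cball alpha (d / 2) q -> cball x0 d (pack q beta (t0 + a * h)).
Proof.
have [_ [_ [_ [ha _]]]] := hsmall; move=> hq; apply: pack_dist_le.
- by move=> i; have := hq i; lra.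
- by move=> i; rewrite Rminus_diag Rabs_R0; lra.
- by rewrite (_ : t0 + a * h - t0 = a * h) ?Rabs_mult ?(Rabs_right h); [lra | lra | ring].
Qed.

Let w2_in q P : cball alpha (d / 2) q -> cball beta (d / 2) P ->
  cball x0 d (pack q P (t0 + (1 - a) * h)).
Proof.
have [_ [_ [_ [_ [ha _]]]]] := hsmall; move=> hq hP; apply: pack_dist_le.
- by move=> i; have := hq i; lra.
- by move=> i; have := hP i; lra.
- by rewrite (_ : t0 + (1 - a) * h - t0 = (1 - a) * h) ?Rabs_mult ?(Rabs_right h); [lra | lra | ring].
Qed.

Let half_step_le l y : cball x0 d y -> Rabs (h / 2 * D1 l y) <= B1 * h / 2.
Proof.
move=> hy; rewrite Rabs_mult (Rabs_right (h / 2)); last lra.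
by have := D1_le l hy; have := Rabs_pos (D1 l y); nra.
Qed.

Let half_step_contract u v r : 0 <= r -> Rabs (u - v) <= B2 * Mr * r ->
  Rabs (h / 2 * u - h / 2 * v) <= 1 / 2 * r.
Proof.
have [_ [_ [_ [_ [_ hB2]]]]] := hsmall.
move=> r0 huv; rewrite -Rmult_minus_distr_l Rabs_mult (Rabs_right (h / 2)); last lra.
by have := Rabs_pos (u - v); nra.
Qed.

Let quarter_half (c x : vec n) : cball c (d / 4) x -> cball c (d / 2) x.
Proof. by apply: cball_le; lra. Qed.

(* Both implicit equations are fixed points of maps contracting by 1/2. *)
Lemma scheme_q_solvable : exists q, cball alpha (d / 4) q /\
  forall i, q i = alpha i + h / 2 * D1 (pcoord i) (pack q beta (t0 + a * h)).
Proof.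
have [_ [_ [hB1 _]]] := hsmall.
pose Phi (q : vec n) i := alpha i + h / 2 * D1 (pcoord i) (pack q beta (t0 + a * h)).
have [q [hqb hqf]] : exists q, cball alpha (d / 4) q /\ Phi q = q.
  apply: (@contraction_fixpoint n Phi alpha (d / 4) (1 / 2)); try lra.
  + move=> x hx i; rewrite /Phi (_ : forall u v : R, u + v - u = v); last by move=> *; ring.
    by apply: Rle_trans (half_step_le _ (w1_in (quarter_half hx))) _; lra.
  + move=> x y r r0 hx hy hxy i.
    rewrite /Phi (_ : forall u v w : R, u + v - (u + w) = v - w); last by move=> *; ring.
    apply: (half_step_contract r0).
    have := ham_field_lipschitz (qcoord i) (w1_in (quarter_half hx)) (w1_in (quarter_half hy)).
    rewrite /ham_field !pack_q; apply; apply: pack_dist_le => //.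
      by move=> k; rewrite Rminus_diag Rabs_R0.
    by rewrite Rminus_diag Rabs_R0.
by exists q; split => // i; rewrite -{1}hqf.
Qed.

Lemma scheme_P_solvable q : cball alpha (d / 4) q -> exists P, cball beta (d / 4) P /\
  forall i, P i = beta i - h / 2 * D1 (qcoord i) (pack q beta (t0 + a * h))
                         - h / 2 * D1 (qcoord i) (pack q P (t0 + (1 - a) * h)).
Proof.
have [_ [_ [hB1 _]]] := hsmall; move=> hq.
pose Psi (P : vec n) i := beta i - h / 2 * D1 (qcoord i) (pack q beta (t0 + a * h))
                                 - h / 2 * D1 (qcoord i) (pack q P (t0 + (1 - a) * h)).
have [P [hPb hPf]] : exists P, cball beta (d / 4) P /\ Psi P = P.
  apply: (@contraction_fixpoint n Psi beta (d / 4) (1 / 2)); try lra.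
  + move=> x hx i; rewrite /Psi.
    have := half_step_le (qcoord i) (w1_in (quarter_half hq)).
    have := half_step_le (qcoord i) (w2_in (quarter_half hq) (quarter_half hx)).
    set u := h / 2 * D1 _ (pack q beta _); set v := h / 2 * D1 _ _.
    rewrite (_ : beta i - u - v - beta i = - (u + v)) ?Rabs_Ropp; last ring.
    by have := Rabs_triang u v; lra.
  + move=> x y r r0 hx hy hxy i.
    rewrite /Psi (_ : forall b u v w : R, b - u - v - (b - u - w) = - (v - w)); last by move=> *; ring.
    rewrite Rabs_Ropp; apply: (half_step_contract r0).
    have := ham_field_lipschitz (pcoord i) (w2_in (quarter_half hq) (quarter_half hx))
      (w2_in (quarter_half hq) (quarter_half hy)).
    rewrite /ham_field !pack_p (_ : forall u v : R, - u - - v = - (u - v)) ?Rabs_Ropp;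
      last by move=> *; ring.
    apply; apply: pack_dist_le => //.
      by move=> k; rewrite Rminus_diag Rabs_R0.
    by rewrite Rminus_diag Rabs_R0.
by exists P; split => // i; rewrite -{1}hPf.
Qed.

Lemma scheme_solvable : exists q P, cball alpha (d / 4) q /\ cball beta (d / 4) P /\
  step_eqs Hq Hp h t0 a alpha beta q P.
Proof.
have [q [hq eq]] := scheme_q_solvable.
have [P [hP eP]] := scheme_P_solvable hq.
exists q, P; do 2 (split => //); split => i.
- by rewrite eHp -eq.
- by rewrite /step_p !eHq -eP.
Qed.

Section Solution.
Variables q P : vec n.
Hypotheses (hq : cball alpha (d / 2) q) (hP : cball beta (d / 2) P).
Hypothesis hsolve : step_eqs Hq Hp h t0 a alpha beta q P.

Let w1 := pack q beta (t0 + a * h).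
Let w2 := pack q P (t0 + (1 - a) * h).
Let w1K : cball x0 d w1. Proof. exact: w1_in hq. Qed.
Let w2K : cball x0 d w2. Proof. exact: w2_in hq hP. Qed.

Let q_incr i : q i - alpha i = h / 2 * D1 (pcoord i) w1.
Proof. by case: hsolve => sq _; rewrite sq eHp /w1; ring. Qed.

Let P_incr i : P i - beta i = - (h / 2 * D1 (qcoord i) w1) - h / 2 * D1 (qcoord i) w2.
Proof. by case: hsolve => _ sP; rewrite sP /step_p !eHq /w1 /w2; ring. Qed.

Let K1h : B1 * h <= K1 * h /\ Rabs a * h <= K1 * h /\ Rabs (1 - a) * h <= K1 * h /\ h <= K1 * h.
Proof. by rewrite /K1; have := Rabs_pos a; have := Rabs_pos (1 - a); repeat split; nra. Qed.

Lemma scheme_two_stage_form k : pack (step_Q Hp h t0 a q P) P (t0 + h) k =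
  x0 k + h / 2 * (ham_field w1 k + ham_field w2 k).
Proof.
rewrite /x0 /ham_field; case: (coord_cases k) => [[i ->]|[[i ->]| ->]].
- by rewrite !pack_q /step_Q eHp -/w2; have := q_incr i; lra.
- by rewrite !pack_p; have := P_incr i; lra.
- by rewrite !pack_t; field.
Qed.

Lemma scheme_stages_near : cball x0 (K1 * h) w1 /\ cball x0 (K1 * h) w2.
Proof.
have qa : forall i, Rabs (q i - alpha i) <= K1 * h.
  by move=> i; rewrite q_incr; apply: Rle_trans (half_step_le _ w1K) _; lra.
have Pb : forall i, Rabs (P i - beta i) <= K1 * h.
  move=> i; rewrite P_incr; apply: Rle_trans (Rabs_triang _ _) _; rewrite !Rabs_Ropp.
  by have := half_step_le (qcoord i) w1K; have := half_step_le (qcoord i) w2K; lra.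
have tK : forall c : R, Rabs c * h <= K1 * h -> Rabs (t0 + c * h - t0) <= K1 * h.
  by move=> c hc; rewrite (_ : t0 + c * h - t0 = c * h) ?Rabs_mult ?(Rabs_right h); [lra | lra | ring].
split; apply: pack_dist_le => //; try (apply: tK; lra).
by move=> i; rewrite Rminus_diag Rabs_R0; lra.
Qed.

Lemma scheme_stages_sum_le k :
  Rabs ((w1 k - x0 k) + (w2 k - x0 k) - h * ham_field x0 k) <= h * (B2 * Mr * (K1 * h)).
Proof.
have [w1d w2d] := scheme_stages_near.
have l1 := fun k => ham_field_lipschitz k w1K x0_in w1d.
have l2 := fun k => ham_field_lipschitz k w2K x0_in w2d.
rewrite /w1 /w2 /x0; case: (coord_cases k) => [[i ->]|[[i ->]| ->]].
- have := l1 (qcoord i); rewrite /ham_field !pack_q -/w1 -/x0.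
  rewrite (_ : q i - alpha i + (q i - alpha i) - h * D1 (pcoord i) x0 =
               h * (D1 (pcoord i) w1 - D1 (pcoord i) x0)); last by rewrite q_incr; field.
  by rewrite Rabs_mult (Rabs_right h); [apply: Rmult_le_compat_l; lra | lra].
- have := l1 (pcoord i); have := l2 (pcoord i); rewrite /ham_field !pack_p -/w1 -/w2 -/x0.
  rewrite (_ : beta i - beta i + (P i - beta i) - h * - D1 (qcoord i) x0 =
     h / 2 * (- D1 (qcoord i) w1 - - D1 (qcoord i) x0) +
     h / 2 * (- D1 (qcoord i) w2 - - D1 (qcoord i) x0)); last by rewrite P_incr; field.
  move=> b2 b1; apply: Rle_trans (Rabs_triang _ _) _.
  rewrite !(Rabs_mult (h / 2)) (Rabs_right (h / 2)); last lra.
  by have := Rabs_pos a; nra.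
- rewrite /ham_field !pack_t (_ : t0 + a * h - t0 + (t0 + (1 - a) * h - t0) - h * 1 = 0); last ring.
  rewrite Rabs_R0; repeat apply: Rmult_le_pos => //; try lra.
  by rewrite /K1; have := Rabs_pos a; have := Rabs_pos (1 - a); lra.
Qed.

Lemma scheme_taylor2 j :
  Rabs (pack (step_Q Hp h t0 a q P) P (t0 + h) j - taylor2 h j) <= Cs * (h * h * h).
Proof.
have [w1d w2d] := scheme_stages_near.
pose v k := (w1 k - x0 k) + (w2 k - x0 k) - h * ham_field x0 k.
have Lv : ham_field_lin v j = ham_field_lin (fun k => w1 k - x0 k) j +
    ham_field_lin (fun k => w2 k - x0 k) j - h * ham_field_lin (ham_field x0) j.
  rewrite (@ham_field_lin_ext _ (fun k => 1 * (w1 k - x0 k + (w2 k - x0 k)) + (- h) * ham_field x0 k));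
    last by move=> k; rewrite /v; ring.
  rewrite ham_field_lin_comb (@ham_field_lin_ext _ (fun k => 1 * (w1 k - x0 k) + 1 * (w2 k - x0 k)));
    last by move=> k; ring.
  by rewrite ham_field_lin_comb; ring.
have K1d : 0 <= K1 * h <= d.
  have [_ [hh [hB1 [ha [ha' _]]]]] := hsmall; have [_ [_ [_ hK]]] := K1h.
  by split; [lra | rewrite /K1; lra].
have t1 := ham_field_taylor j K1d w1d.
have t2 := ham_field_taylor j K1d w2d.
have t3 : Rabs (ham_field_lin v j) <= Mr * (B2 * (h * (B2 * Mr * (K1 * h)))).
  exact: ham_field_lin_le scheme_stages_sum_le.
rewrite scheme_two_stage_form /taylor2.
rewrite (_ : x0 j + h / 2 * (ham_field w1 j + ham_field w2 j) -
    (x0 j + h * ham_field x0 j + h * h / 2 * ham_field_lin (ham_field x0) j) =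
  h / 2 * ((ham_field w1 j - ham_field x0 j - ham_field_lin (fun k => w1 k - x0 k) j) +
           (ham_field w2 j - ham_field x0 j - ham_field_lin (fun k => w2 k - x0 k) j) +
           ham_field_lin v j)); last by rewrite Lv; field.
rewrite Rabs_mult (Rabs_right (h / 2)); last lra.
set e1 := ham_field w1 j - _ - _ in t1 *; set e2 := ham_field w2 j - _ - _ in t2 *.
have : Rabs (e1 + e2 + ham_field_lin v j) <= 2 * Cs * (h * h).
  apply: Rle_trans (Rabs_triang _ _) _; have := Rabs_triang e1 e2.
  have : Mr * (B2 * (h * (B2 * Mr * (K1 * h)))) <= 2 * (Mr * (B2 * (B2 * Mr * K1))) * (h * h).
    have : 0 <= Mr * (B2 * (B2 * Mr * K1)) * (h * h).
      by repeat apply: Rmult_le_pos => //; nra.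
    move=> *; nra.
  have : B3 * Mr * (K1 * h) * Mr * (K1 * h) = B3 * Mr * K1 * Mr * K1 * (h * h) by ring.
  rewrite /Cs; lra.
by have := Rabs_pos (e1 + e2 + ham_field_lin v j); nra.
Qed.

End Solution.
End Step.

Lemma scheme_second_order_local (T : R) (qt pt : R -> vec n) :
  0 < T -> qt t0 = alpha -> pt t0 = beta ->
  (forall t i, t0 - T < t < t0 + T ->
     derivable_pt_lim (fun s => qt s i) t (Hp (qt t) (pt t) t i)) ->
  (forall t i, t0 - T < t < t0 + T ->
     derivable_pt_lim (fun s => pt s i) t (- Hq (qt t) (pt t) t i)) ->
  second_order_accurate Hq Hp t0 a alpha beta qt pt.
Proof.
move=> T0 qt0 pt0 qt_deriv pt_deriv.
have [h1 [h1p small]] := small_step_near0.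
have [h2 [Ce [h2p [Ce0 exact]]]] := exact_flow_taylor2 T0 qt0 pt0 qt_deriv pt_deriv.
have m1 := Rmin_l h1 h2; have m2 := Rmin_r h1 h2.
exists (Rmin h1 h2), (d / 2), (Cs + Ce); split; first exact: Rmin_glb_lt.
split; first lra.
split.
  move=> h hh; have [q [P [hq [hP e]]]] := scheme_solvable (small h ltac:(lra)).
  by exists q, P; split; [|split] => // i; [have := hq i | have := hP i]; lra.
move=> h q P hh hq hP e i.
have hs := scheme_taylor2 (small h ltac:(lra)) (fun j => Rlt_le _ _ (hq j)) (fun j => Rlt_le _ _ (hP j)) e.
have he := exact h ltac:(lra).
have tri : forall x y u : R, Rabs (x - u) <= Cs * (h * h * h) -> Rabs (y - u) <= Ce * (h * h * h) ->
    Rabs (x - y) <= (Cs + Ce) * pow h 3.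
  move=> x y u hx hy; rewrite (_ : x - y = (x - u) - (y - u)); last ring.
  apply: Rle_trans (Rabs_triang _ _) _; rewrite Rabs_Ropp /=; lra.
split.
- by have := hs (qcoord i); have := he (qcoord i); rewrite !pack_q => ex sc; exact: tri sc ex.
- by have := hs (pcoord i); have := he (pcoord i); rewrite !pack_p => ex sc; exact: tri sc ex.
Qed.

End SecondOrder.

Lemma scheme_second_order n (Hq Hp : vec n -> vec n -> R -> vec n)
    (D1 : 'I_(n + n + 1) -> vec (n + n + 1) -> R)
    (D2 : 'I_(n + n + 1) -> 'I_(n + n + 1) -> vec (n + n + 1) -> R)
    (D3 : 'I_(n + n + 1) -> 'I_(n + n + 1) -> 'I_(n + n + 1) -> vec (n + n + 1) -> R) :
  (forall y l m, derivable_pt_lim (fun s => D1 l (upd y m s)) (y m) (D2 l m y)) ->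
  (forall y l m o, derivable_pt_lim (fun s => D2 l m (upd y o s)) (y o) (D3 l m o y)) ->
  (forall l, cont_on (@everywhere _) (D1 l)) ->
  (forall l m, cont_on (@everywhere _) (D2 l m)) ->
  (forall l m o, cont_on (@everywhere _) (D3 l m o)) ->
  (forall q p t i, Hp q p t i = D1 (pcoord i) (pack q p t)) ->
  (forall q p t i, Hq q p t i = D1 (qcoord i) (pack q p t)) ->
  forall (t0 a T : R) (alpha beta : vec n) (qt pt : R -> vec n),
  0 < T -> qt t0 = alpha -> pt t0 = beta ->
  (forall t i, t0 - T < t < t0 + T ->
     derivable_pt_lim (fun s => qt s i) t (Hp (qt t) (pt t) t i)) ->
  (forall t i, t0 - T < t < t0 + T ->
     derivable_pt_lim (fun s => pt s i) t (- Hq (qt t) (pt t) t i)) ->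
  second_order_accurate Hq Hp t0 a alpha beta qt pt.
Proof.
move=> hD2 hD3 hc1 hc2 hc3 eHp eHq t0 a T alpha beta qt pt.
set x0 := pack alpha beta t0.
have [d1 [B1 [d10 [B11 hB1]]]] := cont_family_bounded x0 hc1.
have [d2 [B2 [d20 [B21 hB2]]]] := @cont_family_bounded _ ('I_(n + n + 1) * 'I_(n + n + 1))%type
  (fun p => D2 p.1 p.2) x0 (fun p => hc2 p.1 p.2).
have [d3 [B3 [d30 [B31 hB3]]]] := @cont_family_bounded _ ('I_(n + n + 1) * 'I_(n + n + 1) * 'I_(n + n + 1))%type
  (fun p => D3 p.1.1 p.1.2 p.2) x0 (fun p => hc3 p.1.1 p.1.2 p.2).
have sub : forall e y, e <= Rmin d1 (Rmin d2 d3) -> cball x0 e y -> cball x0 d1 y /\ cball x0 d2 y /\ cball x0 d3 y.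
  move=> e y he hy; have := Rmin_l d1 (Rmin d2 d3); have := Rmin_r d1 (Rmin d2 d3).
  have := Rmin_l d2 d3; have := Rmin_r d2 d3.
  by split; [|split]; apply: cball_le hy; lra.
apply: (@scheme_second_order_local n Hq Hp D1 D2 D3 hD2 hD3 eHp eHq t0 a alpha beta (Rmin d1 (Rmin d2 d3)) B1 B2 B3).
- by repeat apply: Rmin_glb_lt.
- lra.
- lra.
- lra.
- by move=> l y hy; apply: hB1; case: (sub _ _ (Rle_refl _) hy).
- by move=> l m y hy; apply: (hB2 (l, m)); case: (sub _ _ (Rle_refl _) hy) => _ [].
- by move=> l m o y hy; apply: (hB3 (l, m, o)); case: (sub _ _ (Rle_refl _) hy) => _ [].
Qed.

Theorem mainTheorem11 (n : nat) (H : vec n -> vec n -> R -> R)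
    (Hq Hp : vec n -> vec n -> R -> vec n)
    (HC3 : Ck_on (@everywhere (n + n + 1)) 3 (Hpack H))
    (HHq : forall q p t i, derivable_pt_lim (fun s => H (upd q i s) p t) (q i) (Hq q p t i))
    (HHp : forall q p t i, derivable_pt_lim (fun s => H q (upd p i s) t) (p i) (Hp q p t i)) :
  (forall (h t0 a : R) (U : vec (n + n) -> Prop) (qf Pf : vec (n + n) -> vec n),
     0 < h -> is_open U ->
     (forall i, Ck_on U 1 (fun z => qf z i)) ->
     (forall i, Ck_on U 1 (fun z => Pf z i)) ->
     (forall z, U z ->
        step_eqs Hq Hp h t0 a (fst_half z) (snd_half z) (qf z) (Pf z)) ->
     forall z, U z -> forall u v : vec (n + n),
       exists dQu dQv dPu dPv : vec n,
         (forall i, dirder (fun w => step_Q Hp h t0 a (qf w) (Pf w) i) z u (dQu i)) /\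
         (forall i, dirder (fun w => step_Q Hp h t0 a (qf w) (Pf w) i) z v (dQv i)) /\
         (forall i, dirder (fun w => Pf w i) z u (dPu i)) /\
         (forall i, dirder (fun w => Pf w i) z v (dPv i)) /\
         rsum (fun i => dPu i * dQv i - dPv i * dQu i) =
         rsum (fun i => snd_half u i * fst_half v i - snd_half v i * fst_half u i)) /\
  (forall (t0 a T : R) (alpha beta : vec n) (qt pt : R -> vec n),
     0 < T -> qt t0 = alpha -> pt t0 = beta ->
     (forall t i, t0 - T < t < t0 + T ->
        derivable_pt_lim (fun s => qt s i) t (Hp (qt t) (pt t) t i)) ->
     (forall t i, t0 - T < t < t0 + T ->
        derivable_pt_lim (fun s => pt s i) t (- Hq (qt t) (pt t) t i)) ->
     exists h0 r C : R, 0 < h0 /\ 0 < r /\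
       (forall h, 0 < h < h0 ->
          exists q P : vec n, vball alpha r q /\ vball beta r P /\
            step_eqs Hq Hp h t0 a alpha beta q P) /\
       (forall (h : R) (q P : vec n), 0 < h < h0 ->
          vball alpha r q -> vball beta r P ->
          step_eqs Hq Hp h t0 a alpha beta q P ->
          forall i,
            Rabs (step_Q Hp h t0 a q P i - qt (t0 + h) i) <= C * pow h 3 /\
            Rabs (P i - pt (t0 + h) i) <= C * pow h 3)).
Proof.
have [D1 [D2 [D3 [hD1 [hD2 [hD3 [hc1 [hc2 hc3]]]]]]]] := C3_partials HC3.
have eHp := Hp_partial hD1 HHp.
have eHq := Hq_partial hD1 HHq.
have D2_sym := mixed_partials_sym hD1 hD2 hc2.
split.
- move=> h t0 a U qf Pf _ hU hq hP hsolve z hz u v.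
  exact: (scheme_symplectic hD2 hc2 D2_sym eHp eHq hU hq hP hsolve hz).
- exact: (scheme_second_order hD2 hD3 hc1 hc2 hc3 eHp eHq).
Qed.
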